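(* Let $f:A\to B$ be a ring homomorphism, $\mathfrak b$ an ideal of $B$, and $A\bowtie^f\mathfrak b:=\{(a,f(a)+b): a\in A,\ b\in\mathfrak b\}\subseteq A\times B$. Let $n\in\{1,2,3,4,5\}$. Assume $f^{-1}(\mathfrak b)$ is a regular ideal of $A$ and $\mathfrak b$ is a regular ideal of $B$. Then $A\bowtie^f\mathfrak b$ satisfies condition $(P_n)$ if and only if $A$ and $B$ satisfy condition $(P_n)$ and $\mathfrak b=B$. Likewise, $A\bowtie^f\mathfrak b$ is a locally Prüfer ring if and only if $A$ and $B$ are locally Prüfer rings and $\mathfrak b=B$.
   Context: All rings are commutative with identity. An element is regular if it is not a zerodivisor; an ideal is regular if it contains a regular element. For a ring $R$: $(P_1)$ $R$ is semi-hereditary, i.e. every finitely generated ideal is projective; $(P_2)$ $R$ has weak global dimension at most 1, meaning $R_{\mathfrak p}$ is a valuation domain for every prime (equivalently maximal) ideal $\mathfrak p$; $(P_3)$ $R$ is arithmetical, i.e. every finitely generated ideal is locally principal; $(P_4)$ $R$ is a Gauss ring, i.e. for an indeterminate $T$, every $g\in R[T]$ satisfies $c(gh)=c(g)c(h)$ for all $h\in R[T]$, where $c(\cdot)$ is the content ideal (the ideal generated by the coefficients); $(P_5)$ $R$ is a Prüfer ring, i.e. every regular finitely generated ideal is invertible. $R$ is locally Prüfer if $R_{\mathfrak m}$ is a Prüfer ring for every maximal ideal $\mathfrak m$. *)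

From HB Require Import structures.
From mathcomp Require Import all_boot all_algebra ring.
From mathcomp Require Import boolp.

Set Implicit Arguments.
Unset Strict Implicit.
Unset Printing Implicit Defensive.

Import GRing.Theory.
Local Open Scope ring_scope.
Local Open Scope quotient_scope.

Section Basic.
Variable R : comPzRingType.

Definition is_ideal (I : R -> Prop) : Prop :=
  [/\ I 0, (forall x y, I x -> I y -> I (x + y))
    & (forall r x, I x -> I (r * x))].

Definition zerodivisor (x : R) : Prop := exists y : R, y != 0 /\ x * y = 0.
Definition regular (x : R) : Prop := ~ zerodivisor x.
Definition regular_ideal (I : R -> Prop) : Prop := exists x, I x /\ regular x.

Definition prime_ideal (P : R -> Prop) : Prop :=
  [/\ is_ideal P, ~ P 1 & forall x y, P (x * y) -> P x \/ P y].

Definition maximal_ideal (M : R -> Prop) : Prop :=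
  [/\ is_ideal M, ~ M 1 &
      forall J : R -> Prop, is_ideal J -> (forall x, M x -> J x) ->
        J 1 \/ (forall x, J x -> M x)].

Definition gen_ideal (n : nat) (a : 'I_n -> R) : R -> Prop :=
  fun x => exists r : 'I_n -> R, x = \sum_(i < n) r i * a i.

Definition ideal_of (X : R -> Prop) : R -> Prop :=
  fun x => exists n (r g : 'I_n -> R),
    (forall i, X (g i)) /\ x = \sum_(i < n) r i * g i.

Definition prod_set (I J : R -> Prop) : R -> Prop :=
  fun x => exists n (a b : 'I_n -> R),
    (forall i, I (a i) /\ J (b i)) /\ x = \sum_(i < n) a i * b i.

Definition same_set (I J : R -> Prop) : Prop := forall x, I x <-> J x.

Definition principal_ideal (I : R -> Prop) : Prop :=
  exists g : R, same_set I (fun x => exists r, x = r * g).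

Definition valuation_domain : Prop :=
  [/\ (1 != 0 :> R),
      (forall x y : R, x * y = 0 -> x = 0 \/ y = 0)
    & (forall x y : R, (exists c, y = x * c) \/ (exists c, x = y * c))].

(* finitely generated projective ideal: I is a retract (direct summand) of a *)
(* finite free module R^m, i.e. there are R-linear maps p : R^m -> I and     *)
(* s : I -> R^m with p \o s = id_I                                           *)
Definition projective_ideal (I : R -> Prop) : Prop :=
  exists (m : nat) (p : 'rV[R]_m -> R) (s : R -> 'rV[R]_m),
    [/\ (forall c u v, p (c *: u + v) = c * p u + p v),
        (forall u, I (p u)),
        (forall c x y, I x -> I y -> s (c * x + y) = c *: s x + s y)
      & (forall x, I x -> p (s x) = x)].

Lemma maximal_prime (M : R -> Prop) : maximal_ideal M -> prime_ideal M.
Proof.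
case=> [[M0 MD MM] M1 Mmax]; split=> // x y Mxy.
have [Mx|Mx] := pselect (M x); [by left|right].
pose J := fun z => exists m r, M m /\ z = m + r * x.
have hJ : is_ideal J.
  split.
  - by exists 0, 0; rewrite mul0r addr0.
  - move=> _ _ [m [r [Mm ->]]] [m' [r' [Mm' ->]]].
    exists (m + m'), (r + r'); split; first exact: MD.
    by rewrite mulrDl !addrA [m + _ + m']addrAC.
  - move=> c _ [m [r [Mm ->]]]; exists (c * m), (c * r).
    by split; [exact: MM|rewrite mulrDr mulrA].
have MJ : forall z, M z -> J z by move=> z Mz; exists z, 0; rewrite mul0r addr0.
case: (Mmax J hJ MJ) => [[m [r [Mm e1]]]|JM]; last first.
  by exfalso; apply: Mx; apply: JM; exists 0, 1; rewrite mul1r add0r.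
have -> : y = y * m + r * (x * y).
  have e2 : y = y * (m + r * x).
    rewrite -e1 mulr1. reflexivity.
  by rewrite {1}e2; ring.
apply: MD; first by apply: MM.
by apply: MM.
Qed.

Lemma prime_compl_1 (P : R -> Prop) : prime_ideal P -> ~ P 1.
Proof. by case. Qed.

Lemma prime_compl_M (P : R -> Prop) : prime_ideal P ->
  forall x y, ~ P x -> ~ P y -> ~ P (x * y).
Proof. by case=> _ _ hP x y nx ny /hP []. Qed.

Lemma regular1 : regular 1.
Proof. by move=> [y [/eqP y0 h]]; apply: y0; rewrite mul1r in h. Qed.

Lemma regularM x y : regular x -> regular y -> regular (x * y).
Proof.
move=> rx ry [z [z0 h]]; case: (eqVneq (y * z) 0) => [yz|yz].
  by apply: ry; exists z.
by apply: rx; exists (y * z); split=> //; rewrite mulrA.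
Qed.

End Basic.

Module Loc.
Section Loc.
Variables (R : comPzRingType) (S : R -> Prop).
Hypotheses (S1 : S 1) (SM : forall x y, S x -> S y -> S (x * y)).

Inductive lpair := LPair { lval :> R * R; _ : `[< S lval.2 >] }.
HB.instance Definition _ := [isSub for lval].
HB.instance Definition _ := [Choice of lpair by <:].

Lemma lpS (x : lpair) : S x.2.
Proof. exact/asboolP/(valP x). Qed.

Definition mkLP (a s : R) (h : S s) : lpair := @LPair (a, s) (introT (asboolP _) h).

Definition equivl (x y : lpair) : bool :=
  `[< exists u, S u /\ u * (x.1 * y.2 - y.1 * x.2) = 0 >].

Lemma equivl_refl : reflexive equivl.
Proof. by move=> x; apply/asboolP; exists 1; split=> //; rewrite subrr mulr0. Qed.

Lemma equivl_sym : symmetric equivl.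
Proof.
move=> x y; apply/asboolP/asboolP => -[u [Su h]]; exists u; split=> //;
  by rewrite -opprB mulrN h oppr0.
Qed.

Lemma equivl_trans : transitive equivl.
Proof.
move=> y x z /asboolP [u [Su h1]] /asboolP [v [Sv h2]]; apply/asboolP.
exists (u * v * y.2); split; first by apply: SM; [apply: SM|apply: lpS].
have -> : u * v * y.2 * (x.1 * z.2 - z.1 * x.2) =
   v * z.2 * (u * (x.1 * y.2 - y.1 * x.2)) + u * x.2 * (v * (y.1 * z.2 - z.1 * y.2))
  by ring.
by rewrite h1 h2 !mulr0 addr0.
Qed.

Canonical equivl_equiv := EquivRel equivl equivl_refl equivl_sym equivl_trans.

Definition type := {eq_quot equivl}.
HB.instance Definition _ : EqQuotient _ equivl type := EqQuotient.on type.
HB.instance Definition _ := Choice.on type.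

Definition zerol := mkLP 0 S1.
Definition onel := mkLP 1 S1.
Definition addl (x y : lpair) := mkLP (x.1 * y.2 + y.1 * x.2) (SM (lpS x) (lpS y)).
Definition oppl (x : lpair) := mkLP (- x.1) (lpS x).
Definition mull (x y : lpair) := mkLP (x.1 * y.1) (SM (lpS x) (lpS y)).

Definition add := lift_op2 type addl.
Definition opp := lift_op1 type oppl.
Definition mul := lift_op2 type mull.
Definition zero : type := \pi zerol.
Definition one : type := \pi onel.

Lemma eqlP (x y : lpair) (u : R) : S u ->
  u * (x.1 * y.2 - y.1 * x.2) = 0 -> \pi_type x = \pi_type y.
Proof. by move=> Su h; apply/eqmodP/asboolP; exists u. Qed.

Lemma pi_add : {morph \pi : x y / addl x y >-> add x y}.
Proof.
move=> x y; unlock add; apply/eqmodP/asboolP.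
have /asboolP [u [Su hu]] : equivl (repr (\pi_type x)) x by rewrite -eqmodE reprK.
have /asboolP [v [Sv hv]] : equivl (repr (\pi_type y)) y by rewrite -eqmodE reprK.
set x' := repr (\pi_type x) in hu *; set y' := repr (\pi_type y) in hv *.
exists (u * v); split; first exact: SM.
rewrite /=.
transitivity (- (v * y'.2 * y.2) * (u * (x'.1 * x.2 - x.1 * x'.2)) -
  u * x'.2 * x.2 * (v * (y'.1 * y.2 - y.1 * y'.2))); first by ring.
by rewrite hu hv !mulr0 subrr.
Qed.
Canonical pi_add_morph := PiMorph2 pi_add.

Lemma pi_opp : {morph \pi : x / oppl x >-> opp x}.
Proof.
move=> x; unlock opp; apply/eqmodP/asboolP.
have /asboolP [u [Su hu]] : equivl (repr (\pi_type x)) x by rewrite -eqmodE reprK.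
set x' := repr (\pi_type x) in hu *.
exists u; split=> //=.
transitivity (u * (x'.1 * x.2 - x.1 * x'.2)); first by ring.
by rewrite hu.
Qed.
Canonical pi_opp_morph := PiMorph1 pi_opp.

Lemma pi_mul : {morph \pi : x y / mull x y >-> mul x y}.
Proof.
move=> x y; unlock mul; apply/eqmodP/asboolP.
have /asboolP [u [Su hu]] : equivl (repr (\pi_type x)) x by rewrite -eqmodE reprK.
have /asboolP [v [Sv hv]] : equivl (repr (\pi_type y)) y by rewrite -eqmodE reprK.
set x' := repr (\pi_type x) in hu *; set y' := repr (\pi_type y) in hv *.
exists (u * v); split; first exact: SM.
rewrite /=.
transitivity (- (v * y'.1 * y.2) * (u * (x'.1 * x.2 - x.1 * x'.2)) -
  u * x.1 * x'.2 * (v * (y'.1 * y.2 - y.1 * y'.2))); first by ring.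
by rewrite hu hv !mulr0 subrr.
Qed.
Canonical pi_mul_morph := PiMorph2 pi_mul.

Lemma addA : associative add.
Proof.
elim/quotW=> x; elim/quotW=> y; elim/quotW=> z; rewrite !piE.
by apply: (@eqlP _ _ 1) => //=; ring.
Qed.

Lemma addC : commutative add.
Proof.
elim/quotW=> x; elim/quotW=> y; rewrite !piE.
by apply: (@eqlP _ _ 1) => //=; ring.
Qed.

Lemma add0 : left_id zero add.
Proof.
elim/quotW=> x; rewrite /zero !piE.
by apply: (@eqlP _ _ 1) => //=; ring.
Qed.

Lemma addN : left_inverse zero opp add.
Proof.
elim/quotW=> x; rewrite /zero !piE.
by apply: (@eqlP _ _ 1) => //=; ring.
Qed.

HB.instance Definition _ := GRing.isZmodule.Build type addA addC add0 addN.

Lemma mulA : associative mul.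
Proof.
elim/quotW=> x; elim/quotW=> y; elim/quotW=> z; rewrite !piE.
by apply: (@eqlP _ _ 1) => //=; ring.
Qed.

Lemma mulC : commutative mul.
Proof.
elim/quotW=> x; elim/quotW=> y; rewrite !piE.
by apply: (@eqlP _ _ 1) => //=; ring.
Qed.

Lemma mul1 : left_id one mul.
Proof.
elim/quotW=> x; rewrite /one !piE.
by apply: (@eqlP _ _ 1) => //=; ring.
Qed.

Lemma mulDl : left_distributive mul add.
Proof.
elim/quotW=> x; elim/quotW=> y; elim/quotW=> z.
rewrite !piE.
by apply: (@eqlP _ _ 1) => //=; ring.
Qed.

HB.instance Definition _ := GRing.Zmodule_isComPzRing.Build type mulA mulC mul1 mulDl.

Definition iota (r : R) : type := \pi_type (mkLP r S1).

End Loc.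
End Loc.
HB.export Loc.


Definition loc_at (R : comPzRingType) (P : R -> Prop) (hP : prime_ideal P) : Type :=
  Loc.type (prime_compl_1 hP) (prime_compl_M hP).
HB.instance Definition _ (R : comPzRingType) (P : R -> Prop) (hP : prime_ideal P) :=
  GRing.ComPzRing.on (loc_at hP).

Definition loc_map_at (R : comPzRingType) (P : R -> Prop) (hP : prime_ideal P)
  : R -> loc_at hP :=
  Loc.iota (prime_compl_1 hP) (prime_compl_M hP).

Definition total_quotient (R : comPzRingType) : Type :=
  Loc.type (@regular1 R) (@regularM R).
HB.instance Definition _ (R : comPzRingType) :=
  GRing.ComPzRing.on (total_quotient R).

Definition to_total (R : comPzRingType) : R -> total_quotient R :=
  Loc.iota (@regular1 R) (@regularM R).


Section Conditions.
Variable R : comPzRingType.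

Definition image_set (T : Type) (phi : R -> T) (I : R -> Prop) : T -> Prop :=
  fun t => exists r, I r /\ t = phi r.

Definition semihereditary : Prop :=
  forall (n : nat) (a : 'I_n -> R), projective_ideal (gen_ideal a).

Definition wgldim_le1 : Prop :=
  forall (P : R -> Prop) (hP : prime_ideal P), valuation_domain (loc_at hP).

Definition arithmetical : Prop :=
  forall (n : nat) (a : 'I_n -> R) (M : R -> Prop) (hM : maximal_ideal M),
    principal_ideal
      (ideal_of (image_set (loc_map_at (maximal_prime hM)) (gen_ideal a))).

Definition submodule_Q (J : total_quotient R -> Prop) : Prop :=
  [/\ J 0, (forall x y, J x -> J y -> J (x + y))
    & (forall r x, J x -> J (to_total r * x))].

Definition invertible_ideal (I : R -> Prop) : Prop :=
  exists J : total_quotient R -> Prop, submodule_Q J /\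
    same_set (prod_set (image_set (@to_total R) I) J)
             (image_set (@to_total R) (fun _ => True)).

Definition prufer : Prop :=
  forall (n : nat) (a : 'I_n -> R),
    regular_ideal (gen_ideal a) -> invertible_ideal (gen_ideal a).

End Conditions.

Definition locally_prufer (R : comPzRingType) : Prop :=
  forall (M : R -> Prop) (hM : maximal_ideal M), prufer (loc_at (maximal_prime hM)).

Definition content (R : comNzRingType) (p : {poly R}) : R -> Prop :=
  gen_ideal (fun i : 'I_(size p) => p`_i).

Definition gauss_ring (R : comNzRingType) : Prop :=
  forall g h : {poly R}, same_set (content (g * h)) (prod_set (content g) (content h)).

Definition Pcond (n : nat) (R : comNzRingType) : Prop :=
  match n with
  | S O => semihereditary R
  | S (S O) => wgldim_le1 R
  | S (S (S O)) => arithmetical R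
  | S (S (S (S O))) => gauss_ring R
  | S (S (S (S (S O)))) => prufer R
  | _ => False
  end.

Section Amalgamation.
Variables (A B : comNzRingType) (f : {rmorphism A -> B}) (b : B -> Prop).
Hypothesis hb : is_ideal b.

Definition amalg_pred : pred (A * B) :=
  fun x => `[< exists (a : A) (y : B), b y /\ x = (a, f a + y) >].

Lemma amalg_subring : subring_closed amalg_pred.
Proof.
case: hb => b0 bD bM.
have bN : forall y, b y -> b (- y) by move=> y /(bM (-1)); rewrite mulN1r.
split.
- by apply/asboolP; exists 1, 0; split=> //; rewrite rmorph1 addr0.
- move=> _ _ /asboolP [a [y [hy ->]]] /asboolP [a' [y' [hy' ->]]].
  apply/asboolP; exists (a - a'), (y - y'); split; first by apply: (bD) => //; exact: (bN).
  by congr (_, _); rewrite rmorphB /=; ring.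
- move=> _ _ /asboolP [a [y [hy ->]]] /asboolP [a' [y' [hy' ->]]].
  apply/asboolP; exists (a * a'), (f a * y' + y * f a' + y * y'); split.
    apply: (bD); last exact: (bM).
    apply: (bD); first exact: (bM).
    by rewrite mulrC; exact: (bM).
  by congr (_, _); rewrite rmorphM /=; ring.
Qed.

Record amalgamation := Amalg { amval :> A * B; _ : amval \in amalg_pred }.
HB.instance Definition _ := [isSub for amval].
HB.instance Definition _ := [Choice of amalgamation by <:].
HB.instance Definition _ := GRing.isSubringClosed.Build _ amalg_pred amalg_subring.
HB.instance Definition _ := [SubChoice_isSubComNzRing of amalgamation by <:].

Definition amalg_ring : comNzRingType := GRing.ComNzRing.clone amalgamation _.

End Amalgamation.

Arguments amalg_ring {A B} f {b} hb.

(* Write [R] for the amalgamation and pick regular [r] in [f^-1(b)] and [s] in [b]. Then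
   [u = (r, 0)] and [v = (0, s)] are orthogonal elements of [R] ([u v = 0]) with [u + v]
   regular. Each of (P1), (P4), (P5) forces such a pair to satisfy [u \in R (u + v)], and each
   of (P2), (P3) and local Prüfer forces [u^2] or [v^2] to vanish at every maximal ideal; both
   conclusions are impossible unless [b = B], the second because otherwise
   [{x | x.2 \in b}] lies in a maximal ideal. When [b = B], [R] is [A x B], presented by two
   complementary idempotents [(1, 0)] and [(0, 1)]; each property passes to a direct factor
   [e R] and is recovered from two complementary factors, the local ones because every prime
   ideal misses [e] or [1 - e] and localizing there only sees the corresponding factor. *)

From HB Require Import structures.
From mathcomp Require Import all_boot all_algebra.
From mathcomp Require Import boolp ring.
From mathcomp Require classical_sets.

Set Implicit Arguments.
Unset Strict Implicit.
Unset Printing Implicit Defensive.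

Import GRing.Theory.
Local Open Scope ring_scope.
Local Open Scope quotient_scope.

Section RingFacts.
Variable R : comPzRingType.
Implicit Types x y z : R.

Lemma regularP x : regular x <-> forall y, x * y = 0 -> y = 0.
Proof.
split=> [rx y xy0|h [y [/eqP y0 xy0]]]; last exact/y0/h.
by apply: contrapT => /eqP y0; apply: rx; exists y.
Qed.

Lemma regular_mulI x : regular x -> injective ( *%R x).
Proof.
move=> /regularP rx y z /= e; apply/eqP; rewrite -subr_eq0; apply/eqP/rx.
by rewrite mulrBr e subrr.
Qed.

Lemma ideal_sum (I : R -> Prop) (J : finType) (F : J -> R) :
  is_ideal I -> (forall j, I (F j)) -> I (\sum_j F j).
Proof. by case=> I0 ID _ IF; elim/big_ind: _. Qed.

Lemma gen_ideal_is_ideal n (a : 'I_n -> R) : is_ideal (gen_ideal a).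
Proof.
split.
- by exists (fun _ => 0); rewrite big1 // => i _; rewrite mul0r.
- move=> _ _ [r ->] [r' ->]; exists (fun i => r i + r' i).
  by rewrite -big_split; apply: eq_bigr => i _; rewrite mulrDl.
- move=> c _ [r ->]; exists (fun i => c * r i).
  by rewrite mulr_sumr; apply: eq_bigr => i _; rewrite mulrA.
Qed.

Lemma gen_ideal_gen n (a : 'I_n -> R) i : gen_ideal a (a i).
Proof.
exists (fun j => (j == i)%:R); rewrite (bigD1 i) //= eqxx mul1r big1 ?addr0 //.
by move=> j /negbTE ->; rewrite mul0r.
Qed.

Lemma prod_set_mul (I J : R -> Prop) x y : I x -> J y -> prod_set I J (x * y).
Proof. by move=> Ix Jy; exists 1%N, (fun _ => x), (fun _ => y); rewrite big_ord1. Qed.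

Lemma prod_setD (I J : R -> Prop) x y :
  prod_set I J x -> prod_set I J y -> prod_set I J (x + y).
Proof.
move=> [n [a [b [hab ->]]]] [m [a' [b' [hab' ->]]]].
pose cat (c : 'I_n -> R) (c' : 'I_m -> R) (i : 'I_(n + m)) :=
  match split i with inl j => c j | inr j => c' j end.
exists (n + m)%N, (cat a a'), (cat b b'); split.
  by move=> i; rewrite /cat; case: (split i).
by rewrite big_split_ord /cat; congr (_ + _); apply: eq_bigr => i _;
  [rewrite (unsplitK (inl _ i))|rewrite (unsplitK (inr _ i))].
Qed.

Lemma prod_set_same (I J I' J' : R -> Prop) :
  same_set I I' -> same_set J J' -> same_set (prod_set I J) (prod_set I' J').
Proof.
by move=> hI hJ x; split=> -[n [a [b [hab ->]]]]; exists n, a, b; split=> // i;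
  have [? ?] := hab i; split; [apply/hI|apply/hJ|apply/hI|apply/hJ].
Qed.

Definition gen_principal n (a : 'I_n -> R) :=
  exists g, (exists mu : 'I_n -> R, g = \sum_i mu i * a i) /\
            forall i, exists rho, a i = rho * g.

Lemma principal_gen_idealP n (a : 'I_n -> R) :
  principal_ideal (gen_ideal a) <-> gen_principal a.
Proof.
split=> [[g hg]|[g [[mu hmu] hr]]].
- exists g; split; last by move=> i; apply/hg/gen_ideal_gen.
  by apply/hg; exists 1; rewrite mul1r.
- exists g => x; split=> [[r ->]|[r ->]].
  + have /choice [rho hrho] := hr; exists (\sum_i r i * rho i).
    by rewrite mulr_suml; apply: eq_bigr => i _; rewrite hrho mulrA.
  + exists (fun i => r * mu i); rewrite hmu mulr_sumr.
    by apply: eq_bigr => i _; rewrite mulrA.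
Qed.

Definition local_ring := forall q : R, (exists y, q * y = 1) \/ (exists y, (1 - q) * y = 1).

Definition fam2 (u v : R) (i : 'I_2) : R := if val i == 0%N then u else v.

Lemma sum_ord2 (F : 'I_2 -> R) : \sum_i F i = F ord0 + F (lift ord0 ord0).
Proof. by rewrite big_ord_recl big_ord1. Qed.

Lemma gen_ideal_fam2 u v x :
  gen_ideal (fam2 u v) x <-> exists al be, x = al * u + be * v.
Proof.
split=> [[r ->]|[al [be ->]]]; first by rewrite sum_ord2; exists (r ord0), (r (lift ord0 ord0)).
by exists (fam2 al be); rewrite sum_ord2.
Qed.

Lemma prime_idem_compl (P : R -> Prop) e1 e2 :
  prime_ideal P -> e1 + e2 = 1 -> ~ P e1 \/ ~ P e2.
Proof.
case=> [[_ PD _] P1 _] he; case: (pselect (P e1)) => h1; last by left.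
by right => h2; apply: P1; rewrite -he; apply: PD.
Qed.

End RingFacts.

Section Fractions.
Variables (R : comPzRingType) (S : R -> Prop).
Hypotheses (S1 : S 1) (SM : forall x y, S x -> S y -> S (x * y)).
Local Notation LT := (Loc.type S1 SM).
Local Notation iota := (Loc.iota S1 SM).

Definition lfrac (a s : R) (h : S s) : LT := \pi_LT (Loc.mkLP a h).

Lemma lfrac_irr a s (h h' : S s) : lfrac a h = lfrac a h'.
Proof. by congr (\pi _); congr Loc.LPair; apply: eq_irrelevance. Qed.

Lemma lfrac_eq a s a' s' (h : S s) (h' : S s') :
  lfrac a h = lfrac a' h' <-> exists u, S u /\ u * (a * s' - a' * s) = 0.
Proof.
split; last by move=> [u [Su hu]]; apply: (Loc.eqlP S1 SM) Su _.
by move=> /eqmodP /asboolP.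
Qed.

Lemma eq_lfrac a s a' s' (h : S s) (h' : S s') :
  a * s' = a' * s -> lfrac a h = lfrac a' h'.
Proof. by move=> e; apply/lfrac_eq; exists 1; rewrite e subrr mulr0. Qed.

Lemma lfrac_surj (q : LT) : exists a s (h : S s), q = lfrac a h.
Proof.
elim/quotW: q => x; exists x.1, x.2, (Loc.lpS x); congr (\pi _).
by apply: val_inj; case: x => [[]].
Qed.

Lemma lfracD a s a' s' (h : S s) (h' : S s') :
  lfrac a h + lfrac a' h' = lfrac (a * s' + a' * s) (SM h h').
Proof.
have -> : lfrac a h + lfrac a' h' = @Loc.add _ _ S1 SM (lfrac a h) (lfrac a' h') by [].
by rewrite -(Loc.pi_add S1 SM); apply: lfrac_irr.
Qed.

Lemma lfracM a s a' s' (h : S s) (h' : S s') :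
  lfrac a h * lfrac a' h' = lfrac (a * a') (SM h h').
Proof.
have -> : lfrac a h * lfrac a' h' = @Loc.mul _ _ S1 SM (lfrac a h) (lfrac a' h') by [].
by rewrite -(Loc.pi_mul S1 SM); apply: lfrac_irr.
Qed.

Lemma lfracN a s (h : S s) : - lfrac a h = lfrac (- a) h.
Proof.
have -> : - lfrac a h = @Loc.opp _ _ S1 SM (lfrac a h) by [].
by rewrite -(Loc.pi_opp S1 SM); apply: lfrac_irr.
Qed.

Lemma lfrac0 : lfrac 0 S1 = 0. Proof. by []. Qed.
Lemma lfrac1 : lfrac 1 S1 = 1. Proof. by []. Qed.
Lemma iotaE a : iota a = lfrac a S1. Proof. by []. Qed.

Lemma lfrac_eq0 a s (h : S s) : lfrac a h = 0 <-> exists u, S u /\ u * a = 0.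
Proof. by rewrite -lfrac0 lfrac_eq mul0r subr0 mulr1. Qed.

Lemma iotaD x y : iota (x + y) = iota x + iota y.
Proof. by rewrite !iotaE lfracD; apply: eq_lfrac; rewrite !mulr1. Qed.

Lemma iotaM x y : iota (x * y) = iota x * iota y.
Proof. by rewrite !iotaE lfracM; apply: eq_lfrac; rewrite !mulr1. Qed.

Lemma iota0 : iota 0 = 0. Proof. by []. Qed.
Lemma iota1 : iota 1 = 1. Proof. by []. Qed.

Lemma iota_sum (I : finType) (F : I -> R) : iota (\sum_i F i) = \sum_i iota (F i).
Proof. exact: (big_morph _ iotaD iota0). Qed.

Lemma iota_lfrac x a s (h : S s) : iota x * lfrac a h = lfrac (x * a) h.
Proof. by rewrite iotaE lfracM; apply: eq_lfrac; rewrite mul1r. Qed.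

Lemma lfrac_mulK x s (h : S s) : lfrac (s * x) h = iota x.
Proof. by rewrite iotaE; apply: eq_lfrac; rewrite mulr1 mulrC. Qed.

Lemma lfrac_sum (I : finType) (F : I -> R) s (h : S s) :
  \sum_i lfrac (F i) h = lfrac (\sum_i F i) h.
Proof.
have lfracDs x y : lfrac (x + y) h = lfrac x h + lfrac y h.
  by rewrite lfracD; apply: eq_lfrac; ring.
have lfrac0s : lfrac 0 h = 0 by apply/lfrac_eq0; exists 1; rewrite mulr0.
by rewrite (big_morph (fun x => lfrac x h) lfracDs lfrac0s).
Qed.

Lemma iota_inj : (forall s, S s -> regular s) -> injective iota.
Proof.
move=> Sreg x y; rewrite !iotaE => /lfrac_eq [u [/Sreg /regularP Su /Su]].
by rewrite !mulr1 => /eqP; rewrite subr_eq0 => /eqP.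
Qed.

End Fractions.

Section AdditiveMorph.
Variables (X Y : comPzRingType) (phi : X -> Y).
Hypothesis phiD : {morph phi : x y / x + y}.

Lemma morph0 : phi 0 = 0.
Proof. by apply: (@addrI _ (phi 0)); rewrite -phiD !addr0. Qed.

Lemma morphB x y : phi (x - y) = phi x - phi y.
Proof.
rewrite phiD; congr (_ + _); apply: (@addrI _ (phi y)).
by rewrite -phiD !subrr morph0.
Qed.

End AdditiveMorph.

Section LocalizationMap.
Variables (X Y : comPzRingType) (SX : X -> Prop) (SY : Y -> Prop).
Hypotheses (SX1 : SX 1) (SXM : forall x y, SX x -> SX y -> SX (x * y)).
Hypotheses (SY1 : SY 1) (SYM : forall x y, SY x -> SY y -> SY (x * y)).
Variable phi : X -> Y.
Hypotheses (phiD : {morph phi : x y / x + y}) (phiM : {morph phi : x y / x * y})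
           (phi1 : phi 1 = 1).
Hypothesis phiS : forall s, SX s -> SY (phi s).

Local Notation LX := (Loc.type SX1 SXM).
Local Notation LY := (Loc.type SY1 SYM).

Definition locmap (q : LX) : LY := lfrac SY1 SYM (phi (repr q).1) (phiS (Loc.lpS (repr q))).

Lemma locmap_lfrac a s (h : SX s) : locmap (lfrac SX1 SXM a h) = lfrac SY1 SYM (phi a) (phiS h).
Proof.
have /asboolP [u [Su hu]] : Loc.equivl (repr (\pi_LX (Loc.mkLP a h))) (Loc.mkLP a h)
  by rewrite -eqmodE reprK.
apply/lfrac_eq; exists (phi u); split; first exact: phiS.
by rewrite -!phiM -(morphB phiD) -phiM hu (morph0 phiD).
Qed.

Lemma locmapD : {morph locmap : q q' / q + q'}.
Proof.
move=> q q'; have [a [s [h ->]]] := lfrac_surj q; have [a' [s' [h' ->]]] := lfrac_surj q'.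
by rewrite lfracD !locmap_lfrac lfracD; apply: eq_lfrac; rewrite phiD !phiM.
Qed.

Lemma locmapM : {morph locmap : q q' / q * q'}.
Proof.
move=> q q'; have [a [s [h ->]]] := lfrac_surj q; have [a' [s' [h' ->]]] := lfrac_surj q'.
by rewrite lfracM !locmap_lfrac lfracM; apply: eq_lfrac; rewrite !phiM.
Qed.

Lemma locmap_iota x : locmap (Loc.iota SX1 SXM x) = Loc.iota SY1 SYM (phi x).
Proof. by rewrite !iotaE locmap_lfrac; apply: eq_lfrac; rewrite phi1. Qed.

Lemma locmap1 : locmap 1 = 1.
Proof. by rewrite -(iota1 SX1 SXM) locmap_iota phi1. Qed.

End LocalizationMap.

Section LocalizationAtPrime.
Variables (R : comPzRingType) (P : R -> Prop) (hP : prime_ideal P).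
Local Notation fr := (lfrac (prime_compl_1 hP) (prime_compl_M hP)).
Local Notation iota := (loc_map_at hP).
Let fr1 : fr 1 (prime_compl_1 hP) = 1 :> loc_at hP. Proof. by []. Qed.

Lemma loc_at_local : local_ring (loc_at hP).
Proof.
move=> q; have [x [s [hs ->]]] := lfrac_surj q.
have [[P0 PD PM] P1 Pm] := hP.
case: (pselect (P x)) => Px; last first.
  by left; exists (fr s Px); rewrite lfracM -fr1; apply: eq_lfrac; ring.
have Psx : ~ P (s - x).
  by move=> h; apply: hs; rewrite -(subrK x s); apply: PD => //; rewrite -mul1r; apply: PM.
right; exists (fr s Psx).
rewrite -fr1 lfracN lfracD lfracM; apply: eq_lfrac; ring.
Qed.

Lemma loc_map_regular t : regular t -> regular (iota t).
Proof.
move=> /regularP rt; apply/regularP => q; have [x [s [hs ->]]] := lfrac_surj q.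
rewrite /loc_map_at iotaE lfracM => /lfrac_eq0 [w [Pw wtx]].
by apply/lfrac_eq0; exists w; split=> //; apply: rt; rewrite mulrCA.
Qed.

Lemma loc_map_eq0 x : iota x = 0 -> exists w, ~ P w /\ w * x = 0.
Proof. by rewrite /loc_map_at iotaE => /lfrac_eq0. Qed.

Lemma loc_map0 : iota 0 = 0. Proof. by []. Qed.
Lemma loc_mapD x y : iota (x + y) = iota x + iota y. Proof. exact: iotaD. Qed.
Lemma loc_mapM x y : iota (x * y) = iota x * iota y. Proof. exact: iotaM. Qed.

End LocalizationAtPrime.

(* [c : corner X Y] identifies [Y] with the direct factor [e X] of [X], for the idempotent
   [e := cidem c]: [cproj c] is a surjective ring map, injective on [e X], mapping [e] to 1. *)
Record corner (X Y : comPzRingType) := Corner {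
  cproj : X -> Y;
  cidem : X;
  cprojD : {morph cproj : x y / x + y};
  cprojM : {morph cproj : x y / x * y};
  cproj1 : cproj 1 = 1;
  cproj_surj : forall y, exists x, cproj x = y;
  cidemK : cidem * cidem = cidem;
  cproj_idem : cproj cidem = 1;
  cproj_ker : forall x, cproj x = 0 -> cidem * x = 0 }.

Section CornerTheory.
Variables (X Y : comPzRingType) (c : corner X Y).
Local Notation phi := (cproj c).
Local Notation e := (cidem c).
Local Notation cprojD := (cprojD c).
Local Notation cprojM := (cprojM c).
Local Notation cproj1 := (cproj1 c).
Local Notation cproj_surj := (cproj_surj c).
Local Notation cidemK := (cidemK c).
Local Notation cproj_idem := (cproj_idem c).
Local Notation cproj_ker := (@cproj_ker _ _ c).

Lemma cproj0 : phi 0 = 0. Proof. exact: (morph0 cprojD). Qed.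

Lemma cprojB x y : phi (x - y) = phi x - phi y. Proof. exact: (morphB cprojD). Qed.

Lemma cproj_sum (I : finType) (F : I -> X) : phi (\sum_i F i) = \sum_i phi (F i).
Proof. exact: (big_morph phi cprojD cproj0). Qed.

Definition csec (y : Y) : X := e * projT1 (cid (cproj_surj y)).

Lemma cproj_sec y : phi (csec y) = y.
Proof. by rewrite /csec cprojM cproj_idem mul1r; case: (cid _). Qed.

Lemma cidem_csec y : e * csec y = csec y.
Proof. by rewrite /csec mulrA cidemK. Qed.

Lemma cproj_idem_inj x x' : e * x = x -> e * x' = x' -> phi x = phi x' -> x = x'.
Proof.
move=> ex ex' e_phi; apply/eqP; rewrite -subr_eq0; apply/eqP.
by rewrite -ex -ex' -mulrBr cproj_ker // cprojB e_phi subrr.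
Qed.

Lemma csec_proj x : csec (phi x) = e * x.
Proof.
apply: cproj_idem_inj; [exact: cidem_csec|by rewrite mulrA cidemK|].
by rewrite cproj_sec cprojM cproj_idem mul1r.
Qed.

Lemma csecD : {morph csec : y y' / y + y'}.
Proof.
move=> y y'; apply: cproj_idem_inj; first exact: cidem_csec.
  by rewrite mulrDr !cidem_csec.
by rewrite cprojD !cproj_sec.
Qed.

Lemma csecM : {morph csec : y y' / y * y'}.
Proof.
move=> y y'; apply: cproj_idem_inj; first exact: cidem_csec.
  by rewrite mulrA cidem_csec.
by rewrite cprojM !cproj_sec.
Qed.

Lemma csec0 : csec 0 = 0. Proof. exact: (morph0 csecD). Qed.

Lemma csec1 : csec 1 = e.
Proof.
by apply: cproj_idem_inj; [exact: cidem_csec|exact: cidemK|rewrite cproj_sec cproj_idem].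
Qed.

Lemma csec_sum (I : finType) (F : I -> Y) : csec (\sum_i F i) = \sum_i csec (F i).
Proof. exact: (big_morph csec csecD csec0). Qed.

Lemma csec_mulr y x : csec y * x = csec (y * phi x).
Proof.
apply: cproj_idem_inj; [by rewrite mulrA cidem_csec|exact: cidem_csec|].
by rewrite cprojM !cproj_sec.
Qed.

Lemma cproj_regular x : regular x -> regular (phi x).
Proof.
move=> /regularP rx; apply/regularP => y; have [x' <-] := cproj_surj y => xx'0.
have /rx ex' : x * (e * x') = 0 by rewrite mulrCA cproj_ker // cprojM xx'0.
by rewrite -[phi x']mul1r -cproj_idem -cprojM ex' cproj0.
Qed.

Lemma cpreim_ideal (I : Y -> Prop) : is_ideal I -> is_ideal (fun x => I (phi x)).
Proof.
case=> I0 ID IM; split=> [|x y|r x]; rewrite ?cproj0 ?cprojD ?cprojM //; [exact: ID|exact: IM].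
Qed.

Lemma prime_cpreim (P : Y -> Prop) : prime_ideal P -> prime_ideal (fun x => P (phi x)).
Proof.
case=> hI P1 Pm; split; first exact: cpreim_ideal.
  by rewrite cproj1.
by move=> x y; rewrite cprojM => /Pm.
Qed.

Definition cimage (I : X -> Prop) : Y -> Prop := fun y => exists x, I x /\ phi x = y.

Lemma cimage_ideal (I : X -> Prop) : is_ideal I -> is_ideal (cimage I).
Proof.
case=> I0 ID IM; split.
- by exists 0; rewrite cproj0.
- by move=> _ _ [x [Ix <-]] [y [Iy <-]]; exists (x + y); rewrite cprojD; split=> //; apply: ID.
- move=> r _ [x [Ix <-]]; have [r' <-] := cproj_surj r.
  by exists (r' * x); rewrite cprojM; split=> //; apply: IM.
Qed.

Lemma cimageP (P : X -> Prop) : prime_ideal P -> ~ P e -> forall x, P x <-> cimage P (phi x).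
Proof.
move=> [[P0 PD PM] _ Pm] Pe x; split=> [Px|[x' [Px' ex]]]; first by exists x.
have : P (e * (x' - x)) by rewrite cproj_ker // cprojB ex subrr.
case/Pm => // Pd; rewrite -[x](addrNK x') -opprB -mulN1r.
by apply: PD => //; apply: PM.
Qed.

Lemma prime_cimage (P : X -> Prop) : prime_ideal P -> ~ P e -> prime_ideal (cimage P).
Proof.
move=> hP Pe; have [hI _ Pm] := hP; have PE := cimageP hP Pe.
split; first exact: cimage_ideal.
  by rewrite -cproj1 -PE; case: hP.
move=> y y'; have [x <-] := cproj_surj y; have [x' <-] := cproj_surj y'.
by rewrite -cprojM -!PE; exact: Pm.
Qed.

Lemma maximal_cpreim (M : Y -> Prop) : maximal_ideal M -> maximal_ideal (fun x => M (phi x)).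
Proof.
case=> hI M1 Mmax; split; [exact: cpreim_ideal|by rewrite cproj1|].
move=> J hJ MJ; have [J0 JD JM] := hJ.
case: (Mmax (cimage J) (cimage_ideal hJ)) => [y My|[x [Jx ex]]|JM'].
- by have [x ex] := cproj_surj y; exists x; split=> //; apply: MJ; rewrite ex.
- left; have J1e : J (1 - e) by apply: MJ; rewrite cprojB cproj1 cproj_idem subrr; case: hI.
  have ex1 : e * (1 - x) = 0 by apply: cproj_ker; rewrite cprojB ex cproj1 subrr.
  have -> : (1 : X) = e * x + (1 - e) * 1 + e * (1 - x) by ring.
  by rewrite ex1 addr0 mulr1; apply: JD => //; apply: JM.
- by right => x Jx; apply: JM'; exists x.
Qed.

Lemma maximal_cimage (M : X -> Prop) : maximal_ideal M -> ~ M e -> maximal_ideal (cimage M).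
Proof.
move=> hM Me; have hP := maximal_prime hM; have [hI M1 _] := prime_cimage hP Me.
have [hMI _ Mmax] := hM; have ME := cimageP hP Me.
split=> // J hJ MJ; have MJ' : forall x, M x -> J (phi x) by move=> x /ME /MJ.
case: (Mmax _ (cpreim_ideal hJ) MJ') => [J1|JM]; first by left; rewrite -cproj1.
by right => y; have [x <-] := cproj_surj y => Jx; apply/ME/JM.
Qed.

End CornerTheory.

Section ComplementaryCorners.
Variables (R A B : comPzRingType) (cA : corner R A) (cB : corner R B).
Hypothesis e1 : cidem cA + cidem cB = 1.

Lemma cidem_orth : cidem cA * cidem cB = 0.
Proof.
have -> : cidem cB = 1 - cidem cA by rewrite -e1 addrC addKr.
by rewrite mulrBr mulr1 cidemK subrr.
Qed.

Lemma cidem_csec_orth y : cidem cA * csec cB y = 0.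
Proof. by rewrite -(cidem_csec cB y) mulrA cidem_orth mul0r. Qed.

Lemma csec_orth x y : csec cA x * csec cB y = 0.
Proof. by rewrite -(cidem_csec cA x) -mulrA mulrCA cidem_csec_orth mulr0. Qed.

Lemma cidem_decomp z : z = cidem cA * z + cidem cB * z.
Proof. by rewrite -mulrDl e1 mul1r. Qed.

End ComplementaryCorners.

Section InverseCorner.
Variables (X Y : comPzRingType) (c : corner X Y).
Hypothesis c_idem1 : cidem c = 1.

Let csec1_1 : csec c 1 = 1. Proof. by rewrite csec1 c_idem1. Qed.

Let csec_surj x : exists y, csec c y = x.
Proof. by exists (cproj c x); rewrite csec_proj c_idem1 mul1r. Qed.

Let csec_ker y : csec c y = 0 -> 1 * y = 0.
Proof. by move=> y0; rewrite mul1r -(cproj_sec c y) y0 cproj0. Qed.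

Definition inv_corner : corner Y X :=
  @Corner Y X (csec c) 1 (csecD c) (csecM c) csec1_1 csec_surj (mulr1 1) csec1_1 csec_ker.

Lemma inv_cornerK x : cproj inv_corner (cproj c x) = x.
Proof. by rewrite /= csec_proj c_idem1 mul1r. Qed.

Lemma valuation_domain_corner : valuation_domain X -> valuation_domain Y.
Proof.
have cproj_inj x : cproj c x = 0 -> x = 0 by move/cproj_ker; rewrite c_idem1 mul1r.
case=> /eqP X10 Xdom Xcmp; split.
- by apply/eqP => Y10; apply/X10/cproj_inj; rewrite cproj1 Y10.
- move=> y y'; have [x <-] := cproj_surj c y; have [x' <-] := cproj_surj c y'.
  by rewrite -cprojM => /cproj_inj/Xdom [] ->; rewrite cproj0; [left|right].
- move=> y y'; have [x <-] := cproj_surj c y; have [x' <-] := cproj_surj c y'.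
  by case: (Xcmp x x') => [[d ->]|[d ->]]; [left|right]; exists (cproj c d); rewrite cprojM.
Qed.

End InverseCorner.

Section LocalizationCorner.
Variables (X Y : comPzRingType) (c : corner X Y).
Variables (P : Y -> Prop) (hP : prime_ideal P) (P' : X -> Prop) (hP' : prime_ideal P').
Hypothesis P'E : forall x, P' x <-> P (cproj c x).
Local Notation frX := (lfrac (prime_compl_1 hP') (prime_compl_M hP')).
Local Notation frY := (lfrac (prime_compl_1 hP) (prime_compl_M hP)).

Let cprojS s : ~ P' s -> ~ P (cproj c s). Proof. by move=> P's /P'E. Qed.

Let lmap : loc_at hP' -> loc_at hP := locmap (prime_compl_1 hP) (prime_compl_M hP) cprojS.

Let lmap_lfrac a s (h : ~ P' s) : lmap (frX a h) = frY (cproj c a) (cprojS h).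
Proof. exact: (locmap_lfrac _ _ _ _ (cprojD c) (cprojM c)). Qed.

Let lmap_surj q : exists q', lmap q' = q.
Proof.
have [a [s [h ->]]] := lfrac_surj q; have [x <-] := cproj_surj c a.
have [t et] := cproj_surj c s; have P't : ~ P' t by rewrite P'E et.
by exists (frX x P't); rewrite lmap_lfrac; move: (cprojS P't); rewrite et => h'; apply: lfrac_irr.
Qed.

Let lmap_ker q : lmap q = 0 -> 1 * q = 0.
Proof.
rewrite mul1r; have [x [s [h ->]]] := lfrac_surj q.
rewrite lmap_lfrac => /lfrac_eq0 [w [Pw wx0]]; have [om eom] := cproj_surj c w.
have P'om : ~ P' om by rewrite P'E eom.
have P'e : ~ P' (cidem c) by rewrite P'E cproj_idem; case: hP.
apply/lfrac_eq0; exists (cidem c * om); split; first exact: prime_compl_M.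
by rewrite -mulrA; apply: cproj_ker; rewrite cprojM eom.
Qed.

Let lmap1 : lmap 1 = 1.
Proof. exact: (locmap1 _ _ _ _ (cprojD c) (cprojM c) (cproj1 c)). Qed.

Definition loc_corner : corner (loc_at hP') (loc_at hP) :=
  @Corner _ _ lmap 1 (locmapD _ _ (cprojD c) (cprojM c) cprojS)
    (locmapM _ _ (cprojD c) (cprojM c) cprojS) lmap1 lmap_surj (mulr1 1) lmap1 lmap_ker.

Lemma loc_corner_map x : cproj loc_corner (loc_map_at hP' x) = loc_map_at hP (cproj c x).
Proof. exact: (locmap_iota _ _ _ _ (cprojD c) (cprojM c) (cproj1 c)). Qed.

End LocalizationCorner.

Section LocalCorners.
Variables (X Y : comPzRingType) (c : corner X Y).

Lemma loc_corner_cpreim (P : Y -> Prop) (hP : prime_ideal P)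
    (hP' : prime_ideal (fun x => P (cproj c x))) :
  exists d : corner (loc_at hP') (loc_at hP),
    cidem d = 1 /\ forall x, cproj d (loc_map_at hP' x) = loc_map_at hP (cproj c x).
Proof.
by exists (loc_corner hP hP' (fun x => iff_refl _)); split=> // x; apply: loc_corner_map.
Qed.

Lemma loc_corner_cimage (P' : X -> Prop) (hP' : prime_ideal P')
    (hP : prime_ideal (cimage c P')) : ~ P' (cidem c) ->
  exists d : corner (loc_at hP) (loc_at hP'),
    cidem d = 1 /\ forall x, cproj d (loc_map_at hP (cproj c x)) = loc_map_at hP' x.
Proof.
move=> P'e; pose d := loc_corner hP hP' (cimageP hP' P'e).
exists (inv_corner (erefl : cidem d = 1)); split=> // x.
by rewrite -(loc_corner_map hP hP' (cimageP hP' P'e)) inv_cornerK.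
Qed.

End LocalCorners.

Lemma wgldim_corner (X Y : comPzRingType) (c : corner X Y) : wgldim_le1 X -> wgldim_le1 Y.
Proof.
move=> hX P hP; have [d [d1 _]] := loc_corner_cpreim hP (prime_cpreim c hP).
exact: valuation_domain_corner d1 (hX _ _).
Qed.

Lemma wgldim_glue (R A B : comPzRingType) (cA : corner R A) (cB : corner R B) :
  cidem cA + cidem cB = 1 -> wgldim_le1 A -> wgldim_le1 B -> wgldim_le1 R.
Proof.
move=> e1 hA hB P hP.
have glue Z (c : corner R Z) : ~ P (cidem c) -> wgldim_le1 Z -> valuation_domain (loc_at hP).
  move=> Pe hZ; have [d [d1 _]] := loc_corner_cimage hP (prime_cimage hP Pe) Pe.
  exact: valuation_domain_corner d1 (hZ _ _).
by case: (prime_idem_compl hP e1) => Pe; [exact: glue _ cA Pe hA|exact: glue _ cB Pe hB].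
Qed.

Lemma gen_principal_cproj (X Y : comPzRingType) (c : corner X Y) n (a : 'I_n -> X) :
  gen_principal a -> gen_principal (fun i => cproj c (a i)).
Proof.
move=> [g [[mu ->] ga]]; exists (cproj c (\sum_i mu i * a i)); split.
  by exists (fun i => cproj c (mu i)); rewrite cproj_sum; apply: eq_bigr => i _; rewrite cprojM.
by move=> i; have [rho ->] := ga i; exists (cproj c rho); rewrite cprojM.
Qed.

Lemma ideal_of_image_gen (R L : comPzRingType) (h : R -> L)
    (hD : {morph h : x y / x + y}) (hM : {morph h : x y / x * y}) n (a : 'I_n -> R) :
  same_set (ideal_of (image_set h (gen_ideal a))) (gen_ideal (fun i => h (a i))).
Proof.
have hI := gen_ideal_is_ideal (fun i => h (a i)); have [_ _ IM] := hI.
move=> x; split=> [[m [r [g [hg ->]]]]|[r ->]].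
- apply: ideal_sum => // k; apply: (IM); have [_ [[rho ->] ->]] := hg k.
  rewrite (big_morph h hD (morph0 hD)); apply: ideal_sum => // j.
  by rewrite hM; apply: IM; apply: gen_ideal_gen.
- exists n, r, (fun i => h (a i)); split=> // i.
  by exists (a i); split=> //; apply: gen_ideal_gen.
Qed.

Lemma arithmeticalP (R : comPzRingType) : arithmetical R <->
  forall n (a : 'I_n -> R) M (hM : maximal_ideal M),
    gen_principal (fun i => loc_map_at (maximal_prime hM) (a i)).
Proof.
have idE n (a : 'I_n -> R) M (hM : maximal_ideal M) :=
  ideal_of_image_gen (loc_mapD (maximal_prime hM)) (loc_mapM (maximal_prime hM)) a.
split=> h n a M hM.
- apply/principal_gen_idealP; have [g hg] := h n a M hM.
  by exists g => x; rewrite -idE; apply: hg.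
- have [g hg] := (principal_gen_idealP _).2 (h n a M hM).
  by exists g => x; rewrite idE; apply: hg.
Qed.

Lemma arithmetical_corner (X Y : comPzRingType) (c : corner X Y) :
  arithmetical X -> arithmetical Y.
Proof.
move=> /arithmeticalP hX; apply/arithmeticalP => n a M hM.
have hM' := maximal_cpreim c hM.
have [d [_ dE]] := loc_corner_cpreim (maximal_prime hM) (maximal_prime hM').
suff <- : (fun i => cproj d (loc_map_at _ (csec c (a i)))) =
          (fun i => loc_map_at (maximal_prime hM) (a i)).
  exact/gen_principal_cproj/hX.
by apply: funext => i; rewrite dE cproj_sec.
Qed.

Lemma arithmetical_glue (R A B : comPzRingType) (cA : corner R A) (cB : corner R B) :
  cidem cA + cidem cB = 1 -> arithmetical A -> arithmetical B -> arithmetical R.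
Proof.
move=> e1 hA hB; apply/arithmeticalP => n a M hM.
have glue Z (c : corner R Z) : ~ M (cidem c) -> arithmetical Z ->
    gen_principal (fun i => loc_map_at (maximal_prime hM) (a i)).
  move=> Me /arithmeticalP hZ; have hMZ := maximal_cimage hM Me.
  have [d [_ dE]] := loc_corner_cimage (maximal_prime hM) (maximal_prime hMZ) Me.
  suff <- : (fun i => cproj d (loc_map_at _ (cproj c (a i)))) =
            (fun i => loc_map_at (maximal_prime hM) (a i)).
    exact/gen_principal_cproj/hZ.
  by apply: funext => i; rewrite dE.
by case: (prime_idem_compl (maximal_prime hM) e1) => Me;
  [exact: glue _ cA Me hA|exact: glue _ cB Me hB].
Qed.

Lemma gen_ideal_map (X Y : comPzRingType) (h : X -> Y)
    (hD : {morph h : x y / x + y}) (hM : {morph h : x y / x * y})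
    (k : Y) n (a : 'I_n -> X) (b : 'I_n -> Y) :
  (forall i, h (a i) = k * b i) -> forall x, gen_ideal a x -> gen_ideal b (h x).
Proof.
move=> hab _ [r ->]; exists (fun i => h (r i) * k).
by rewrite (big_morph h hD (morph0 hD)); apply: eq_bigr => i _; rewrite hM hab mulrA.
Qed.

Lemma map_mx_scaleD (X Y : comPzRingType) (h : X -> Y)
    (hD : {morph h : x y / x + y}) (hM : {morph h : x y / x * y}) m n k (u v : 'M_(m, n)) :
  map_mx h (k *: u + v) = h k *: map_mx h u + map_mx h v.
Proof. by apply/matrixP => i j; rewrite !mxE hD hM. Qed.

Lemma linear_row0 (R : comPzRingType) m (p : 'rV[R]_m -> R) :
  (forall c u v, p (c *: u + v) = c * p u + p v) -> p 0 = 0.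
Proof.
move=> hp; have := hp 1 0 0; rewrite scaler0 addr0 mul1r => h.
by apply: (@addrI _ (p 0)); rewrite addr0 -h.
Qed.

Section SemihereditaryCorner.
Variables (X Y : comPzRingType) (c : corner X Y).
Local Notation phi := (cproj c).
Local Notation sec := (csec c).

Lemma gen_ideal_cproj n (a : 'I_n -> X) x :
  gen_ideal a x -> gen_ideal (fun i => phi (a i)) (phi x).
Proof. by apply: (gen_ideal_map (cprojD c) (cprojM c) (k := 1)) => i; rewrite mul1r. Qed.

Lemma gen_ideal_csec n (a : 'I_n -> Y) y :
  gen_ideal a y -> gen_ideal (fun i => sec (a i)) (sec y).
Proof. by apply: (gen_ideal_map (csecD c) (csecM c) (k := 1)) => i; rewrite mul1r. Qed.

Lemma semihereditary_corner : semihereditary X -> semihereditary Y.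
Proof.
move=> hX n a; have [m [p [s [pL pI sL ps]]]] := hX n (fun i => sec (a i)).
exists m, (fun u => phi (p (map_mx sec u))), (fun y => map_mx phi (s (sec y))); split.
- by move=> k u v; rewrite (map_mx_scaleD (csecD c) (csecM c)) pL cprojD cprojM cproj_sec.
- move=> u; have [r ->] := pI (map_mx sec u); rewrite cproj_sum.
  by exists (fun i => phi (r i)); apply: eq_bigr => i _; rewrite cprojM cproj_sec.
- move=> k x y Ix Iy; rewrite csecD csecM sL; try exact: gen_ideal_csec.
  by apply/matrixP => i j; rewrite !mxE cprojD cprojM cproj_sec.
- move=> x Ix.
  have -> : map_mx sec (map_mx phi (s (sec x))) = cidem c *: s (sec x).
    by apply/matrixP => i j; rewrite !mxE csec_proj.
  have := pL (cidem c) (s (sec x)) 0; rewrite !addr0 (linear_row0 pL) addr0 => ->.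
  by rewrite cprojM cproj_idem mul1r ps ?cproj_sec //; exact: gen_ideal_csec.
Qed.

End SemihereditaryCorner.

Lemma semihereditary_glue (R A B : comPzRingType) (cA : corner R A) (cB : corner R B) :
  cidem cA + cidem cB = 1 -> semihereditary A -> semihereditary B -> semihereditary R.
Proof.
move=> e1 hA hB n a.
have [mA [pA [sA [pAL pAI sAL psA]]]] := hA n (fun i => cproj cA (a i)).
have [mB [pB [sB [pBL pBI sBL psB]]]] := hB n (fun i => cproj cB (a i)).
exists (mA + mB)%N,
  (fun u => csec cA (pA (map_mx (cproj cA) (lsubmx u))) +
            csec cB (pB (map_mx (cproj cB) (rsubmx u)))),
  (fun x => row_mx (map_mx (csec cA) (sA (cproj cA x))) (map_mx (csec cB) (sB (cproj cB x)))).
split.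
- move=> k u v; rewrite !linearP (map_mx_scaleD (cprojD cA) (cprojM cA)).
  rewrite (map_mx_scaleD (cprojD cB) (cprojM cB)).
  rewrite pAL pBL !csecD !csecM !csec_proj.
  by rewrite ![cidem cA * k * _]mulrAC ![cidem cB * k * _]mulrAC !cidem_csec; ring.
- move=> u.
  have [rA ->] := pAI (map_mx (cproj cA) (lsubmx u)).
  have [rB ->] := pBI (map_mx (cproj cB) (rsubmx u)).
  exists (fun i => csec cA (rA i) * cidem cA + csec cB (rB i) * cidem cB).
  rewrite !csec_sum -big_split /=; apply: eq_bigr => i _; rewrite !csecM !csec_proj; ring.
- move=> k x y Ix Iy; rewrite !cprojD !cprojM sAL ?sBL; try exact: gen_ideal_cproj.
  rewrite scale_row_mx add_row_mx; congr row_mx; apply/matrixP => i j;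
    by rewrite !mxE csecD csecM csec_proj mulrAC cidem_csec; ring.
- move=> x Ix; rewrite row_mxKl row_mxKr.
  have cK Z (d : corner R Z) m' (w : 'rV_m') : map_mx (cproj d) (map_mx (csec d) w) = w.
    by apply/matrixP => i j; rewrite !mxE cproj_sec.
  rewrite !cK psA ?psB; try exact: gen_ideal_cproj.
  by rewrite !csec_proj -cidem_decomp.
Qed.

Lemma content_widen (R : comNzRingType) (p : {poly R}) N : (size p <= N)%N ->
  same_set (content p) (gen_ideal (fun i : 'I_N => p`_i)).
Proof.
move=> pN; pose ext M (r : 'I_M -> R) j := if insub j is Some i then r i else 0.
have extE M (r : 'I_M -> R) (i : 'I_M) : ext M r i = r i by rewrite /ext valK.
have widen M (r : 'I_M -> R) :
    \sum_(i < size p) ext M r i * p`_i = \sum_(i < N) ext M r i * p`_i.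
  rewrite (big_ord_widen N (fun i => ext M r i * p`_i) pN) big_mkcond /=.
  apply: eq_bigr => i _; case: ifP => // /negbT; rewrite -leqNgt => pi.
  by rewrite nth_default ?mulr0.
move=> x; split=> -[r ->]; exists (ext _ r).
- by rewrite -widen; apply: eq_bigr => i _; rewrite extE.
- by rewrite widen; apply: eq_bigr => i _; rewrite extE.
Qed.

Lemma prod_set_map (X Y : comPzRingType) (h : X -> Y)
    (hD : {morph h : x y / x + y}) (hM : {morph h : x y / x * y})
    (I J : X -> Prop) (I' J' : Y -> Prop) :
  (forall x, I x -> I' (h x)) -> (forall x, J x -> J' (h x)) ->
  forall x, prod_set I J x -> prod_set I' J' (h x).
Proof.
move=> hI hJ _ [n [a [b [hab ->]]]]; exists n, (fun i => h (a i)), (fun i => h (b i)).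
split; first by move=> i; have [? ?] := hab i; split; [apply: hI|apply: hJ].
by rewrite (big_morph h hD (morph0 hD)); apply: eq_bigr => i _; rewrite hM.
Qed.

Lemma size_polyM_leqD (R : nzRingType) (p q : {poly R}) N :
  (size p <= N)%N -> (size q <= N)%N -> (size (p * q)%R <= N + N)%N.
Proof.
move=> pN qN; apply: (@leq_trans _ _ _ (size_polyMleq p q)).
exact: leq_trans (leq_pred _) (leq_add pN qN).
Qed.

(* Used with [theta \o psi = id] (lifting along a corner by [csec]) and with
   [theta \o psi = e *] (projecting onto a corner [e X] and lifting back). *)
Section ContentTransfer.
Variables (X Y : comNzRingType) (psi : X -> Y) (theta : Y -> X) (k : X).
Hypotheses (psiD : {morph psi : x y / x + y}) (psiM : {morph psi : x y / x * y}).
Hypotheses (thetaD : {morph theta : x y / x + y}) (thetaM : {morph theta : x y / x * y}).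
Hypothesis thetaK : forall x, theta (psi x) = k * x.
Variables (g h : {poly X}).

Let N := (size g + size h)%N.
Let M := (N + N)%N.
Let g' := \poly_(i < N) psi g`_i.
Let h' := \poly_(i < N) psi h`_i.
Local Notation cont p := (gen_ideal (fun i : 'I_M => p`_i)).

Let coef_psi (p : {poly X}) : (size p <= N)%N -> forall j, (\poly_(i < N) psi p`_i)`_j = psi p`_j.
Proof.
move=> pN j; rewrite coef_poly; case: ifP => // /negbT; rewrite -leqNgt => pj.
by rewrite nth_default ?(morph0 psiD) //; apply: leq_trans pj.
Qed.

Let gN : (size g <= N)%N. Proof. exact: leq_addr. Qed.
Let hN : (size h <= N)%N. Proof. exact: leq_addl. Qed.
Let NM : (N <= M)%N. Proof. exact: leq_addr. Qed.

Let coefM_psi j : (g' * h')`_j = psi (g * h)`_j.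
Proof.
rewrite !coefM (big_morph psi psiD (morph0 psiD)); apply: eq_bigr => i _.
by rewrite psiM !coef_psi.
Qed.

Let contE (R : comNzRingType) (p : {poly R}) := content_widen (N := M) (p := p).

Lemma content_transfer : gauss_ring Y -> forall x,
  (content (g * h) x -> prod_set (content g) (content h) (k * x)) /\
  (prod_set (content g) (content h) x -> content (g * h) (k * x)).
Proof.
move=> gaussY x.
have g'M : (size g' <= M)%N := leq_trans (size_poly _ _) NM.
have h'M : (size h' <= M)%N := leq_trans (size_poly _ _) NM.
have prodE := prod_set_same (contE (leq_trans gN NM)) (contE (leq_trans hN NM)).
have prodE' := prod_set_same (contE g'M) (contE h'M).
have psi_cont p q : (forall i, q`_i = psi p`_i) -> forall y, cont p y -> cont q (psi y).
  by move=> pq; apply: (gen_ideal_map psiD psiM (k := 1)) => i; rewrite mul1r pq.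
have theta_cont (p : {poly Y}) (q : {poly X}) : (forall i, theta p`_i = k * q`_i) ->
    forall y, cont p y -> cont q (theta y).
  exact: (gen_ideal_map thetaD thetaM).
have theta_g i : theta g'`_i = k * g`_i by rewrite coef_psi.
have theta_h i : theta h'`_i = k * h`_i by rewrite coef_psi.
split.
- move=> /(contE (size_polyM_leqD gN hN)) /(psi_cont _ (g' * h') coefM_psi) gh'x.
  have /gaussY /(prodE' _) : content (g' * h') (psi x).
    exact/(contE (size_polyM_leqD (size_poly _ _) (size_poly _ _))).
  rewrite -thetaK.
  move=> /(prod_set_map thetaD thetaM (theta_cont _ _ theta_g) (theta_cont _ _ theta_h)).
  by move/(prodE _).
- move=> /(prodE _).
  move=> /(prod_set_map psiD psiM (psi_cont _ _ (coef_psi gN)) (psi_cont _ _ (coef_psi hN))).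
  move=> /(prodE' _) /gaussY /(contE (size_polyM_leqD (size_poly _ _) (size_poly _ _))).
  rewrite -thetaK => /(theta_cont (g' * h') (g * h)) gh; apply/(contE (size_polyM_leqD gN hN)).
  by apply: gh => i; rewrite coefM_psi thetaK.
Qed.

End ContentTransfer.

Lemma gauss_corner (X Y : comNzRingType) (c : corner X Y) : gauss_ring X -> gauss_ring Y.
Proof.
move=> gaussX g h x; have cK y : cproj c (csec c y) = 1 * y by rewrite mul1r cproj_sec.
have [gh_prod prod_gh] :=
  content_transfer (csecD c) (csecM c) (cprojD c) (cprojM c) cK g h gaussX x.
by split=> [/gh_prod|/prod_gh]; rewrite mul1r.
Qed.

Lemma gauss_glue (R A B : comNzRingType) (cA : corner R A) (cB : corner R B) :
  cidem cA + cidem cB = 1 -> gauss_ring A -> gauss_ring B -> gauss_ring R.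
Proof.
move=> e1 gaussA gaussB g h x.
have transfer (Z : comNzRingType) (c : corner R Z) :=
  content_transfer (cprojD c) (cprojM c) (csecD c) (csecM c) (csec_proj c) g h.
have [ghA prodA] := transfer _ cA gaussA x; have [ghB prodB] := transfer _ cB gaussB x.
split=> [gh|pr]; rewrite (cidem_decomp e1 x); first by apply: prod_setD; [exact: ghA|exact: ghB].
by have [_ D _] := gen_ideal_is_ideal (fun i : 'I_(size (g * h)) => (g * h)`_i); apply: D;
  [exact: prodA|exact: prodB].
Qed.

(* The fractions [c i / d] of the total ring of fractions generate an inverse of the ideal
   generated by the [a j]. *)
Definition inverse_fractions (R : comPzRingType) n (a : 'I_n -> R) :=
  exists d (c : 'I_n -> R), [/\ regular d,
    (forall i j, exists z, c i * a j = d * z) & \sum_i c i * a i = d].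

Section InvertibleIdeals.
Variable R : comPzRingType.
Local Notation Q := (total_quotient R).
Local Notation io := (Loc.iota (@regular1 R) (@regularM R)).
Local Notation fr := (lfrac (@regular1 R) (@regularM R)).

Lemma to_total_inj : injective io.
Proof. by apply: iota_inj. Qed.

Lemma common_denominator m (b : 'I_m -> Q) :
  exists d, regular d /\ forall k, exists p, io d * b k = io p.
Proof.
elim: m b => [|m IH] b; first by exists 1; split; [exact: regular1|case].
have [d0 [d0reg d0b]] := IH (fun k => b (lift ord0 k)).
have [p [s [sreg bE]]] := lfrac_surj (b ord0).
exists (d0 * s); split=> [|k]; first exact: regularM.
case: (unliftP ord0 k) => [k'|] -> /=.
  by have [p' p'E] := d0b k'; exists (s * p'); rewrite !iotaM -p'E; ring.
by exists (d0 * p); rewrite bE iota_lfrac -(lfrac_mulK _ _ (d0 * p) sreg) mulrCA mulrA.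
Qed.

Lemma invertible_inverse_fractions n (a : 'I_n -> R) :
  invertible_ideal (gen_ideal a) -> inverse_fractions a.
Proof.
rewrite /invertible_ideal /submodule_Q /to_total => -[J [[J0 JD JM] IJ]].
have [m [al [be [hab e1]]]] := (IJ (io 1)).2 (ex_intro _ 1 (conj I (erefl _))).
have /choice [x hx] : forall k, exists x, gen_ideal a x /\ al k = io x.
  by move=> k; have [[y [hy ->]] _] := hab k; exists y.
have /choice [rho rhoE] : forall k, exists r : 'I_n -> R, x k = \sum_i r i * a i.
  by move=> k; have [[r rE] _] := hx k; exists r.
have [d [dreg /choice [p pE]]] := common_denominator be.
have /choice [z zE] : forall j, exists z : 'I_m -> R, forall k, io (a j) * be k = io (z k).
  move=> j; have /choice [zj zjE] : forall k, exists zk, io (a j) * be k = io zk.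
    move=> k; have /(IJ _).1 [zk [_ ->]] :
        prod_set (image_set io (gen_ideal a)) J (io (a j) * be k).
      by apply: prod_set_mul; [exists (a j); split=> //; apply: gen_ideal_gen|case: (hab k)].
    by exists zk.
  by exists zj.
have dz j k : d * z j k = a j * p k by apply: to_total_inj; rewrite !iotaM -zE -pE; ring.
have dE : d = \sum_k x k * p k.
  apply: to_total_inj; rewrite iota_sum -[io d]mulr1 -iota1 e1 mulr_sumr.
  by apply: eq_bigr => k _; have [_ ->] := hx k; rewrite iotaM mulrCA pE.
exists d, (fun i => \sum_k rho k i * p k); split => //.
- move=> i j; exists (\sum_k rho k i * z j k).
  by rewrite mulr_suml mulr_sumr; apply: eq_bigr => k _; rewrite [RHS]mulrCA dz; ring.
- rewrite dE; under eq_bigr do rewrite mulr_suml.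
  rewrite exchange_big /=; apply: eq_bigr => k _.
  by rewrite rhoE mulr_suml; apply: eq_bigr => i _; ring.
Qed.

Lemma inverse_fractions_invertible n (a : 'I_n -> R) :
  inverse_fractions a -> invertible_ideal (gen_ideal a).
Proof.
rewrite /invertible_ideal /submodule_Q /to_total => -[d [c [dreg cz cE]]].
have /choice [z zE] : forall i, exists z : 'I_n -> R, forall j, c i * a j = d * z j.
  by move=> i; have /choice [f fE] := cz i; exists f.
pose q i := fr (c i) dreg.
pose J y := exists r : 'I_n -> R, y = \sum_i io (r i) * q i.
have Jsub : submodule_Q J.
  split.
  - by exists (fun _ => 0); rewrite big1 // => i _; rewrite iota0 mul0r.
  - move=> _ _ [r ->] [r' ->]; exists (fun i => r i + r' i).
    by rewrite -big_split; apply: eq_bigr => i _; rewrite iotaD mulrDl.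
  - move=> r _ [r' ->]; exists (fun i => r * r' i); rewrite mulr_sumr.
    by apply: eq_bigr => i _; rewrite iotaM mulrA.
have aq j i : io (a j) * q i = io (z i j) by rewrite iota_lfrac mulrC zE lfrac_mulK.
pose Ip (y : Q) := exists r, y = io r.
have Ip_sum (I : finType) (F : I -> Q) : (forall i, Ip (F i)) -> Ip (\sum_i F i).
  move=> IF; elim/big_ind: _ => //; first by exists 0.
  by move=> _ _ [r ->] [r' ->]; exists (r + r'); rewrite iotaD.
exists J; split => // y; split.
- move=> [m [al [be [hab ->]]]].
  suff [r ->] : Ip (\sum_(i < m) al i * be i) by exists r.
  apply: (Ip_sum) => k; have [[w [[rho ->] ->]] [r ->]] := hab k.
  rewrite iota_sum !mulr_suml; apply: (Ip_sum) => j; rewrite mulr_sumr; apply: (Ip_sum) => i.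
  by exists (rho j * r i * z i j); rewrite !iotaM -aq; ring.
- move=> [w [_ ->]]; exists n, (fun i => io (a i)), (fun i => io w * q i); split.
  + move=> i; split; first by exists (a i); split=> //; apply: gen_ideal_gen.
    exists (fun k => if k == i then w else 0); rewrite (bigD1 i) //= eqxx big1 ?addr0 //.
    by move=> k /negbTE ->; rewrite iota0 mul0r.
  + rewrite (eq_bigr (fun i => io w * (io (a i) * q i))); last by move=> i _; ring.
    rewrite -mulr_sumr; under eq_bigr do rewrite iota_lfrac.
    rewrite lfrac_sum (eq_bigr (fun i => c i * a i)) ?cE; last by move=> i _; rewrite mulrC.
    suff -> : fr d dreg = 1 by rewrite mulr1.
    by rewrite -(lfrac1 (@regular1 R) (@regularM R)); apply: eq_lfrac; rewrite mulr1 mul1r.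
Qed.

Lemma invertible_gen_idealP n (a : 'I_n -> R) :
  invertible_ideal (gen_ideal a) <-> inverse_fractions a.
Proof. by split; [apply: invertible_inverse_fractions|apply: inverse_fractions_invertible]. Qed.

End InvertibleIdeals.

Section PruferCorner.
Variables (X Y : comPzRingType) (c : corner X Y).
Local Notation phi := (cproj c).
Local Notation sec := (csec c).
Local Notation e := (cidem c).

Lemma regular_compl_csec y : regular y -> regular (1 - e + sec y).
Proof.
move=> /regularP yreg; apply/regularP => z zE.
have ee' : (1 - e) * (1 - e) = 1 - e by rewrite mulrBl mul1r mulrBr mulr1 cidemK subrr subr0.
have e'z : (1 - e) * z = 0.
  have := congr1 ( *%R (1 - e)) zE.
  by rewrite /= mulr0 mulrA mulrDr ee' mulrBl mul1r cidem_csec subrr addr0.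
have ez : e * z = 0.
  apply: cproj_ker; apply: yreg; have := congr1 phi zE.
  by rewrite cproj0 cprojM cprojD cprojB cproj1 cproj_idem subrr add0r cproj_sec.
by rewrite -[z]mul1r -[1](subrK e) mulrDl e'z ez addr0.
Qed.

(* [1 - e] is adjoined to the generators so that the lifted ideal becomes regular in [X]. *)
Definition csec_gens n (a : 'I_n -> Y) (i : 'I_n.+1) : X :=
  if unlift ord0 i is Some j then sec (a j) else 1 - e.

Lemma regular_csec_gens n (a : 'I_n -> Y) :
  regular_ideal (gen_ideal a) -> regular_ideal (gen_ideal (csec_gens a)).
Proof.
move=> [y [[rho ->] yreg]]; exists (1 - e + sec (\sum_j rho j * a j)).
split; last exact: regular_compl_csec.
exists (fun i => if unlift ord0 i is Some j then sec (rho j) else 1).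
rewrite big_ord_recl /csec_gens unlift_none mul1r csec_sum; congr (_ + _).
by apply: eq_bigr => j _; rewrite liftK csecM.
Qed.

Lemma prufer_corner : prufer X -> prufer Y.
Proof.
move=> pruferX n a /regular_csec_gens /pruferX /invertible_gen_idealP [d [k [dreg kd kE]]].
apply/invertible_gen_idealP.
have gensE j : csec_gens a (lift ord0 j) = sec (a j) by rewrite /csec_gens liftK.
have gens0 : csec_gens a ord0 = 1 - e by rewrite /csec_gens unlift_none.
exists (phi d), (fun j => phi (k (lift ord0 j))); split.
- exact: cproj_regular.
- move=> i j; have [z zE] := kd (lift ord0 i) (lift ord0 j).
  by exists (phi z); rewrite -(cproj_sec c (a j)) -cprojM -(gensE j) zE cprojM.
- move: kE; rewrite big_ord_recl gens0 => /(congr1 phi).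
  rewrite cprojD cprojM cprojB cproj1 cproj_idem subrr mulr0 add0r cproj_sum => <-.
  by apply: eq_bigr => j _; rewrite gensE cprojM cproj_sec.
Qed.

End PruferCorner.

Lemma regular_csecD (R A B : comPzRingType) (cA : corner R A) (cB : corner R B) dA dB :
  cidem cA + cidem cB = 1 -> regular dA -> regular dB -> regular (csec cA dA + csec cB dB).
Proof.
move=> e1 dAreg dBreg; apply/regularP => z dz0.
have part Z Z' (c : corner R Z) (c' : corner R Z') (d : Z) (d' : Z') :
    cidem c + cidem c' = 1 -> regular d -> (csec c d + csec c' d') * z = 0 -> cidem c * z = 0.
  move=> ee /regularP dreg dd'z; apply: cproj_ker; apply: dreg.
  have := congr1 ( *%R (cidem c)) dd'z; rewrite mulr0 mulrA mulrDr (cidem_csec_orth ee) addr0.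
  by rewrite cidem_csec csec_mulr => /(congr1 (cproj c)); rewrite cproj_sec cproj0.
have zA := part _ _ cA cB dA dB e1 dAreg dz0.
have zB : cidem cB * z = 0 by apply: (part _ _ cB cA dB dA) => //; rewrite addrC.
by rewrite (cidem_decomp e1 z) zA zB addr0.
Qed.

Lemma prufer_glue (R A B : comPzRingType) (cA : corner R A) (cB : corner R B) :
  cidem cA + cidem cB = 1 -> prufer A -> prufer B -> prufer R.
Proof.
move=> e1 pruferA pruferB n a [t [It treg]]; apply/invertible_gen_idealP.
have reg_cproj Z (c : corner R Z) : regular_ideal (gen_ideal (fun i => cproj c (a i))).
  by exists (cproj c t); split; [exact: gen_ideal_cproj|exact: cproj_regular].
have [dA [kA [dAreg kAd kAE]]] := invertible_inverse_fractions (pruferA _ _ (reg_cproj _ cA)).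
have [dB [kB [dBreg kBd kBE]]] := invertible_inverse_fractions (pruferB _ _ (reg_cproj _ cB)).
have orth x y : csec cA x * csec cB y = 0 := csec_orth e1 x y.
exists (csec cA dA + csec cB dB), (fun i => csec cA (kA i) + csec cB (kB i)); split.
- exact: regular_csecD.
- move=> i j; have [zA zAE] := kAd i j; have [zB zBE] := kBd i j.
  exists (csec cA zA + csec cB zB).
  rewrite mulrDl !csec_mulr zAE zBE !csecM !mulrDr !mulrDl (orth dA zB).
  by rewrite [csec cB dB * csec cA zA]mulrC orth addr0 add0r.
- rewrite -kAE -kBE !csec_sum -big_split /=; apply: eq_bigr => i _.
  by rewrite mulrDl !csec_mulr.
Qed.

Lemma locally_prufer_corner (X Y : comPzRingType) (c : corner X Y) :
  locally_prufer X -> locally_prufer Y.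
Proof.
move=> hX M hM; have hM' := maximal_cpreim c hM.
have [d _] := loc_corner_cpreim (maximal_prime hM) (maximal_prime hM').
exact: prufer_corner d (hX _ hM').
Qed.

Lemma locally_prufer_glue (R A B : comPzRingType) (cA : corner R A) (cB : corner R B) :
  cidem cA + cidem cB = 1 -> locally_prufer A -> locally_prufer B -> locally_prufer R.
Proof.
move=> e1 hA hB M hM.
have glue Z (c : corner R Z) :
    ~ M (cidem c) -> locally_prufer Z -> prufer (loc_at (maximal_prime hM)).
  move=> Me hZ; have hMZ := maximal_cimage hM Me.
  have [d _] := loc_corner_cimage (maximal_prime hM) (maximal_prime hMZ) Me.
  exact: prufer_corner d (hZ _ hMZ).
by case: (prime_idem_compl (maximal_prime hM) e1) => Me;
  [exact: glue _ cA Me hA|exact: glue _ cB Me hB].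
Qed.

Section OrthogonalSums.
Variable R : comPzRingType.
Implicit Types u v w : R.

Definition orthogonal_dvd :=
  forall u v, u * v = 0 -> regular (u + v) -> exists w, w * (u + v) = u.

Definition loc_orthogonal_sq0 :=
  forall u v, u * v = 0 -> regular (u + v) -> forall M (hM : maximal_ideal M),
    loc_map_at (maximal_prime hM) (u * u) = 0 \/ loc_map_at (maximal_prime hM) (v * v) = 0.

Lemma orthogonal_coef u v al be :
  u * v = 0 -> regular (u + v) -> u + v = al * u + be * v -> al * u = u.
Proof.
move=> uv0 treg tE; apply: (regular_mulI treg).
have uu : u * (u + v) = u * u by rewrite mulrDr uv0 addr0.
rewrite [RHS]mulrC uu mulrCA [(u + v) * u]mulrC uu -{2}uu tE mulrDr.
by rewrite [u * (al * u)]mulrCA [u * (be * v)]mulrCA uv0 mulr0 addr0.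
Qed.

Lemma semihereditary_orthogonal_dvd : semihereditary R -> orthogonal_dvd.
Proof.
move=> sh u v uv0 treg; have [m [p [s [pL pI sL ps]]]] := sh 2%N (fam2 u v).
have [I0 _ _] := gen_ideal_is_ideal (fam2 u v).
have It : gen_ideal (fam2 u v) (u + v) by apply/gen_ideal_fam2; exists 1, 1; rewrite !mul1r.
have Iu : gen_ideal (fam2 u v) u by apply/gen_ideal_fam2; exists 1, 0; rewrite mul1r mul0r addr0.
have s0 : s 0 = 0.
  by have := sL 1 0 0 I0 I0; rewrite mul1r addr0 scale1r -{1}[s 0]addr0 => /addrI.
have sZ k x : gen_ideal (fam2 u v) x -> s (k * x) = k *: s x.
  by move=> Ix; have := sL k x 0 Ix I0; rewrite !addr0 s0 addr0.
have pD x y : p (x + y) = p x + p y by have := pL 1 x y; rewrite scale1r mul1r.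
have pZ k x : p (k *: x) = k * p x by have := pL k x 0; rewrite !addr0 (linear_row0 pL) addr0.
have /choice [al /choice [be pE]] :
    forall k : 'I_m, exists al be, p (delta_mx 0 k) = al * u + be * v.
  by move=> k; apply/gen_ideal_fam2/pI.
pose c := s (u + v).
have alu : (\sum_k c 0 k * al k) * u = u.
  apply: (orthogonal_coef uv0 treg (be := \sum_k c 0 k * be k)).
  rewrite -{1}(ps _ It) -/c {1}(row_sum_delta c) (big_morph p pD (linear_row0 pL)).
  by rewrite !mulr_suml -big_split /=; apply: eq_bigr => k _; rewrite pZ pE; ring.
have su : (u + v) *: s u = u *: c by rewrite -sZ // -sZ // mulrC.
exists (\sum_k al k * s u 0 k); rewrite -[RHS]alu !mulr_suml; apply: eq_bigr => k _.
have := congr1 (fun M : 'rV_m => M 0 k) su; rewrite /= !mxE => suk.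
by rewrite -mulrA [_ * (u + v)]mulrC suk; ring.
Qed.

End OrthogonalSums.

Lemma gauss_orthogonal_dvd (S : comNzRingType) : gauss_ring S -> orthogonal_dvd S.
Proof.
move=> gaussS u v uv0 treg.
pose g := u%:P + v%:P * 'X; pose h := v%:P + u%:P * 'X.
have size_CX (a : S) : (size (a%:P * 'X)%R <= 2)%N.
  by rewrite -[_ * 'X]addr0 -polyC0 size_MXaddC; case: ifP => // _; rewrite ltnS size_polyC_leq1.
have size_lin (a b : S) : (size (a%:P + b%:P * 'X)%R <= 2)%N.
  apply: (@leq_trans _ _ _ (size_polyD _ _)).
  by rewrite geq_max size_CX (leq_trans (size_polyC_leq1 _)).
have vu0 : v * u = 0 by rewrite mulrC.
have ghE : g * h = (u * u + v * v)%:P * 'X.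
  transitivity ((u * v)%:P + (u * u + v * v)%:P * 'X + (v * u)%:P * ('X * 'X)).
    by rewrite /g /h !polyCM polyCD; ring.
  by rewrite uv0 vu0 polyC0 mul0r add0r addr0.
have uu_prod : prod_set (content g) (content h) (u * u).
  apply/(prod_set_same (content_widen (size_lin _ _)) (content_widen (size_lin _ _))).
  apply: prod_set_mul.
  - have := gen_ideal_gen (fun i : 'I_2 => g`_i) ord0.
    by rewrite /g coefD coefC coefMX /= addr0.
  - have := gen_ideal_gen (fun i : 'I_2 => h`_i) (lift ord0 ord0).
    by rewrite /h coefD coefC coefMX /= coefC /= add0r.
have size_gh : (size (g * h)%R <= 2)%N by rewrite ghE size_CX.
have /(content_widen size_gh) [r rE] := (gaussS g h (u * u)).2 uu_prod.
pose W := \sum_(i < 2) r i * ('X : {poly S})`_i.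
have uuW : u * u = (u * u + v * v) * W.
  by rewrite {1}rE /W mulr_sumr; apply: eq_bigr => i _; rewrite ghE coefCM; ring.
have tt : (u + v) * (u + v) = u * u + v * v by rewrite mulrDl !mulrDr uv0 vu0 addr0 add0r.
exists W; apply: (regular_mulI treg).
by rewrite mulrCA tt mulrC -uuW mulrDl vu0 addr0.
Qed.


Lemma prufer_orthogonal_dvd (R : comPzRingType) : prufer R -> orthogonal_dvd R.
Proof.
move=> pruferR u v uv0 treg.
have It : regular_ideal (gen_ideal (fam2 u v)).
  by exists (u + v); split=> //; apply/gen_ideal_fam2; exists 1, 1; rewrite !mul1r.
have [d [c [dreg cd]]] := invertible_inverse_fractions (pruferR _ _ It).
rewrite sum_ord2 /= => cE; have [z zE] := cd ord0 ord0; rewrite /fam2 /= in zE.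
exists z; apply: (regular_mulI dreg); rewrite /= mulrA -zE -[in RHS]cE.
rewrite mulrDr mulrDl -[_ * u * v]mulrA -[_ * v * u]mulrA [v * u]mulrC uv0.
by rewrite !mulr0 !addr0.
Qed.

Section LocalRings.
Variable R : comPzRingType.
Hypothesis localR : local_ring R.
Implicit Types u v w x y : R.

Lemma local_unitD x y : (exists k, (x + y) * k = 1) ->
  (exists k, x * k = 1) \/ (exists k, y * k = 1).
Proof.
move=> [k xyk]; case: (localR (x * k)) => [[l xkl]|[l ykl]]; [left|right].
  by exists (k * l); rewrite mulrA.
by exists (k * l); rewrite mulrA -[y * k](addKr (x * k)) -mulrDl xyk addrC.
Qed.

Lemma local_gen_principal_sq0 u v :
  gen_principal (fam2 u v) -> u * v = 0 -> u * u = 0 \/ v * v = 0.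
Proof.
move=> [g [[mu]]]; rewrite sum_ord2 /fam2 /= => gE gdiv uv0.
have [r0 uE] := gdiv ord0; have [r1 vE] := gdiv (lift ord0 ord0); rewrite /fam2 /= in uE vE.
set p := mu ord0 * r0; set q := mu (lift ord0 ord0) * r1.
have sum1 : exists k, (p + (q + (1 - p - q))) * k = 1 by exists 1; rewrite mulr1; ring.
case/local_unitD: sum1 => [[k pk]|].
- right; have gu : g = k * mu ord0 * u by rewrite -[LHS]mul1r -pk uE /p; ring.
  rewrite {1}vE gu; transitivity (r1 * k * mu ord0 * (u * v)); first by ring.
  by rewrite uv0 mulr0.
case/local_unitD => [[k qk]|[k ek]].
- left; have gv : g = k * mu (lift ord0 ord0) * v by rewrite -[LHS]mul1r -qk vE /q; ring.
  rewrite {1}uE gv; transitivity (r0 * k * mu (lift ord0 ord0) * (u * v)); first by ring.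
  by rewrite uv0 mulr0.
- left; have g0 : g = 0.
    rewrite -[LHS]mul1r -ek -mulrAC.
    transitivity (k * (g - (mu ord0 * u + mu (lift ord0 ord0) * v))).
      by rewrite uE vE /p /q; ring.
    by rewrite -gE subrr mulr0.
  by rewrite uE g0 mulr0 mul0r.
Qed.

Lemma local_prufer_orthogonal u v : prufer R -> u * v = 0 -> regular (u + v) -> u = 0 \/ v = 0.
Proof.
move=> pruferR uv0 treg; have [w wE] := prufer_orthogonal_dvd pruferR uv0 treg.
have /regularP t_reg := treg.
have ww : w * (1 - w) = 0.
  apply: (t_reg); apply: (t_reg).
  transitivity ((w * (u + v)) * ((1 - w) * (u + v))); first by ring.
  by rewrite wE mulrBl mul1r wE addrC addKr uv0.
case: (localR w) => [[k wk]|[k wk]].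
- right; have w1 : 1 - w = 0.
    by transitivity (w * k * (1 - w)); [rewrite wk mul1r|rewrite mulrAC ww mul0r].
  have -> : v = (1 - w) * (u + v) by rewrite mulrBl mul1r wE addrC addKr.
  by rewrite w1 mul0r.
- left; have w0 : w = 0 by rewrite -[w]mulr1 -wk mulrA ww mul0r.
  by rewrite -wE w0 mul0r.
Qed.

End LocalRings.

Section LocallyOrthogonal.
Variable R : comPzRingType.
Implicit Types u v : R.

Let loc_orth u v M (hM : maximal_ideal M) : u * v = 0 ->
  loc_map_at (maximal_prime hM) u * loc_map_at (maximal_prime hM) v = 0.
Proof. by move=> uv0; rewrite -loc_mapM uv0 loc_map0. Qed.

Lemma wgldim_loc_orthogonal_sq0 : wgldim_le1 R -> loc_orthogonal_sq0 R.
Proof.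
move=> wR u v uv0 _ M hM; have [_ dom _] := wR _ (maximal_prime hM).
by rewrite !loc_mapM; case: (dom _ _ (loc_orth hM uv0)) => ->; rewrite mul0r; [left|right].
Qed.

Lemma arithmetical_loc_orthogonal_sq0 : arithmetical R -> loc_orthogonal_sq0 R.
Proof.
move=> /arithmeticalP aR u v uv0 _ M hM; rewrite !loc_mapM.
apply: (local_gen_principal_sq0 (@loc_at_local _ _ (maximal_prime hM))); last exact: loc_orth.
suff <- : (fun i => loc_map_at (maximal_prime hM) (fam2 u v i)) =
          fam2 (loc_map_at (maximal_prime hM) u) (loc_map_at (maximal_prime hM) v).
  exact: aR.
by apply: funext => i; rewrite /fam2; case: ifP.
Qed.

Lemma locally_prufer_loc_orthogonal_sq0 : locally_prufer R -> loc_orthogonal_sq0 R.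
Proof.
move=> lpR u v uv0 treg M hM; rewrite !loc_mapM.
have treg' : regular (loc_map_at (maximal_prime hM) u + loc_map_at (maximal_prime hM) v).
  by rewrite -loc_mapD; apply: loc_map_regular.
by case: (local_prufer_orthogonal (@loc_at_local _ _ (maximal_prime hM)) (lpR M hM)
  (loc_orth hM uv0) treg') => ->; rewrite mul0r; [left|right].
Qed.

End LocallyOrthogonal.

Lemma maximal_ideal_above (R : comPzRingType) (K : R -> Prop) :
  is_ideal K -> ~ K 1 -> exists M, maximal_ideal M /\ forall x, K x -> M x.
Proof.
move=> hK K1.
pose T := {I : R -> Prop | [/\ is_ideal I, ~ I 1 & forall x, K x -> I x]}.
pose le : rel T := fun I J => `[< forall x, sval I x -> sval J x >].
have [t tmax] : exists t : T, forall s : T, le t s -> s = t.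
  apply: classical_sets.Zorn.
  - by move=> t; apply/asboolP.
  - by move=> r s t /asboolP h1 /asboolP h2; apply/asboolP => x /h1 /h2.
  - move=> [I hI] [J hJ] /asboolP /= IJ /asboolP /= JI.
    have eIJ : I = J by apply: funext => x; apply: propext; split; [apply: IJ|apply: JI].
    by subst J; congr exist; exact: Prop_irrelevance.
  - move=> C Cchain; case: (pselect (exists I0, C I0)) => [[I0 CI0]|Cnil]; last first.
      by exists (exist _ K (And3 hK K1 (fun x h => h))) => s Cs; case: Cnil; exists s.
    pose U x := exists I : T, C I /\ sval I x.
    have hU : [/\ is_ideal U, ~ U 1 & forall x, K x -> U x].
      split.
      + split.
        * by exists I0; split=> //; case: (svalP I0) => [[]].
        * move=> x y [I [CI Ix]] [J [CJ Jy]].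
          case: (Cchain I J CI CJ) => /asboolP IJ; [exists J|exists I]; split=> //;
            [case: (svalP J) => [[_ D _] _ _]|case: (svalP I) => [[_ D _] _ _]];
            by apply: D => //; apply: IJ.
        * move=> r x [I [CI Ix]]; exists I; split=> //.
          by case: (svalP I) => [[_ _ IM] _ _]; apply: IM.
      + by move=> [I [CI I1]]; case: (svalP I) => _ /(_ I1).
      + by move=> x Kx; exists I0; split=> //; case: (svalP I0) => _ _; apply.
    by exists (exist _ U hU) => s Cs; apply/asboolP => x sx /=; exists s.
exists (sval t); case: (svalP t) => hI I1 KI; split=> //; split=> // J hJ tJ.
case: (pselect (J 1)) => J1; [by left|right => x Jx].
have hJT : [/\ is_ideal J, ~ J 1 & forall x, K x -> J x] by split=> // y /KI /tJ.
by rewrite -(tmax (exist _ J hJT)) //; apply/asboolP.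
Qed.

Section AmalgamationRing.
Variables (A B : comNzRingType) (f : {rmorphism A -> B}) (b : B -> Prop) (hb : is_ideal b).
Local Notation R := (amalg_ring f hb).

Lemma amalg_valM (x y : R) : val (x * y) = val x * val y. Proof. by rewrite rmorphM. Qed.
Lemma amalg_valD (x y : R) : val (x + y) = val x + val y. Proof. by rewrite rmorphD. Qed.

Lemma amalg_val0 : val (0 : R) = 0. Proof. by rewrite rmorph0. Qed.

Lemma amalg_mem (x : R) : exists a y, b y /\ val x = (a, f a + y).
Proof. by have /asboolP := valP x. Qed.

Lemma amalg_eq0 (x : R) : (val x).1 = 0 -> (val x).2 = 0 -> x = 0.
Proof.
by move=> x1 x2; apply: val_inj; rewrite amalg_val0; case: (val x) x1 x2 => ? ? /= -> ->.
Qed.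

Variables (r : A) (s : B).
Hypotheses (rb : b (f r)) (rreg : regular r) (sb : b s) (sreg : regular s).

Let u_mem : (r, 0) \in amalg_pred f b.
Proof.
apply/asboolP; exists r, (- f r); split; last by rewrite subrr.
by case: hb => _ _ bM; rewrite -mulN1r; apply: bM.
Qed.

Let v_mem : (0, s) \in amalg_pred f b.
Proof. by apply/asboolP; exists 0, s; split=> //; rewrite rmorph0 add0r. Qed.

Let u : R := Sub (r, 0) u_mem.
Let v : R := Sub (0, s) v_mem.

Let uv0 : u * v = 0.
Proof. by apply: amalg_eq0; rewrite amalg_valM !SubK /= ?mulr0 ?mul0r. Qed.

Let uv_regular : regular (u + v).
Proof.
apply/regularP => x /(congr1 val); rewrite amalg_valM amalg_valD !SubK => tx0.
apply: amalg_eq0; [apply: ((regularP _).1 rreg)|apply: ((regularP _).1 sreg)].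
- by have := congr1 fst tx0; rewrite /= addr0.
- by have := congr1 snd tx0; rewrite /= add0r.
Qed.

Lemma amalg_full_of_orthogonal_dvd : orthogonal_dvd R -> forall y, b y.
Proof.
move=> /(_ u v uv0 uv_regular) [w /(congr1 val)]; rewrite amalg_valM amalg_valD !SubK.
have [a [y0 [by0 ->]]] := amalg_mem w => wt.
have /= := congr1 fst wt; rewrite addr0 => ar; have /= := congr1 snd wt; rewrite add0r => fas.
have a1 : a = 1 by apply: (regular_mulI rreg); rewrite mulr1 mulrC.
have fay0 : f a + y0 = 0 by apply: ((regularP _).1 sreg); rewrite mulrC.
have y0E : y0 = -1 by rewrite -(addKr (f a) y0) fay0 a1 rmorph1 addr0.
have bN1 : b (-1) by rewrite -y0E.
move=> y; have -> : y = - y * -1 by rewrite mulrNN mulr1.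
by case: hb => _ _ bM; apply: bM.
Qed.

Lemma amalg_full_of_loc_orthogonal_sq0 : loc_orthogonal_sq0 R -> forall y, b y.
Proof.
move=> /(_ u v uv0 uv_regular) loc_sq0; apply: contrapT => b_not_full.
pose K (x : R) := b (val x).2.
have hK : is_ideal K.
  have [b0 bD bM] := hb; split.
  - by rewrite /K amalg_val0.
  - by move=> x y Kx Ky; rewrite /K amalg_valD; apply: bD.
  - by move=> k x Kx; rewrite /K amalg_valM; apply: bM.
have K1 : ~ K 1 by move=> b1; apply: b_not_full => y; rewrite -[y]mulr1; case: hb => _ _; apply.
have [M [hM KM]] := maximal_ideal_above hK K1.
case: (loc_sq0 M hM) => /loc_map_eq0 [w [Mw w0]]; apply/Mw/KM;
  have [a [y [yb ew]]] := amalg_mem w; have := congr1 val w0;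
  rewrite !amalg_valM !SubK ew /K ew /= => wuu.
- suff -> : a = 0 by rewrite rmorph0 add0r.
  have /= ar := congr1 fst wuu.
  by apply: ((regularP _).1 rreg); apply: ((regularP _).1 rreg); rewrite mulrA mulrC.
- suff -> : f a + y = 0 by case: hb.
  have /= fays := congr1 snd wuu.
  by apply: ((regularP _).1 sreg); apply: ((regularP _).1 sreg); rewrite mulrA mulrC.
Qed.

End AmalgamationRing.

Section FullAmalgamation.
Variables (A B : comNzRingType) (f : {rmorphism A -> B}) (b : B -> Prop) (hb : is_ideal b).
Hypothesis b_full : forall y, b y.
Local Notation R := (amalg_ring f hb).

Let amalg_full_mem (p : A * B) : p \in amalg_pred f b.
Proof.
apply/asboolP; exists p.1, (p.2 - f p.1); split; first exact: b_full.
by case: p => x y /=; rewrite addrC subrK.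
Qed.

Let pair (p : A * B) : R := Sub p (amalg_full_mem p).

Let pairK p : val (pair p) = p. Proof. exact: SubK. Qed.

Let idem1 : pair (1, 0) * pair (1, 0) = pair (1, 0).
Proof.
apply: val_inj; rewrite amalg_valM pairK.
by apply: injective_projections; rewrite /= ?mulr1 ?mulr0.
Qed.

Let idem2 : pair (0, 1) * pair (0, 1) = pair (0, 1).
Proof.
apply: val_inj; rewrite amalg_valM pairK.
by apply: injective_projections; rewrite /= ?mulr1 ?mulr0.
Qed.

Let fst_ker (x : R) : (val x).1 = 0 -> pair (1, 0) * x = 0.
Proof.
by move=> x1; apply: amalg_eq0; rewrite amalg_valM pairK /= ?x1 ?mulr0 ?mul0r.
Qed.

Let snd_ker (x : R) : (val x).2 = 0 -> pair (0, 1) * x = 0.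
Proof.
by move=> x2; apply: amalg_eq0; rewrite amalg_valM pairK /= ?x2 ?mulr0 ?mul0r.
Qed.

Definition amalg_corner1 : corner R A :=
  @Corner R A (fun x => (val x).1) (pair (1, 0)) (fun x y => erefl) (fun x y => erefl) erefl
    (fun a => ex_intro _ (pair (a, 0)) (congr1 fst (pairK _)))
    idem1
    (congr1 fst (pairK _)) fst_ker.

Definition amalg_corner2 : corner R B :=
  @Corner R B (fun x => (val x).2) (pair (0, 1)) (fun x y => erefl) (fun x y => erefl) erefl
    (fun y => ex_intro _ (pair (0, y)) (congr1 snd (pairK _)))
    idem2
    (congr1 snd (pairK _)) snd_ker.

Lemma amalg_corners_compl : cidem amalg_corner1 + cidem amalg_corner2 = 1.
Proof.
apply: val_inj; rewrite amalg_valD !pairK rmorph1.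
by apply: injective_projections; rewrite /= ?addr0 ?add0r.
Qed.

End FullAmalgamation.

Section AmalgamationCriterion.
Variable P : comNzRingType -> Prop.
Hypothesis P_corner : forall (X Y : comNzRingType), corner X Y -> P X -> P Y.
Hypothesis P_glue : forall (R A B : comNzRingType) (cA : corner R A) (cB : corner R B),
  cidem cA + cidem cB = 1 -> P A -> P B -> P R.
Hypothesis P_orthogonal : forall R : comNzRingType,
  P R -> orthogonal_dvd R \/ loc_orthogonal_sq0 R.

Lemma amalg_ringP (A B : comNzRingType) (f : {rmorphism A -> B}) (b : B -> Prop)
    (hb : is_ideal b) :
  regular_ideal (fun a => b (f a)) -> regular_ideal b ->
  P (amalg_ring f hb) <-> [/\ P A, P B & forall y, b y].
Proof.
move=> [r [rb rreg]] [s [sb sreg]]; split=> [PR|[PA PB b_full]].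
- have b_full : forall y, b y.
    case: (P_orthogonal PR).
    + exact: amalg_full_of_orthogonal_dvd rb rreg sb sreg.
    + exact: amalg_full_of_loc_orthogonal_sq0 rb rreg sb sreg.
  by split=> //; [exact: P_corner (amalg_corner1 f hb b_full) PR|
                  exact: P_corner (amalg_corner2 f hb b_full) PR].
- exact: P_glue (amalg_corners_compl f hb b_full) PA PB.
Qed.

End AmalgamationCriterion.

Unset Implicit Arguments.
Set Strict Implicit.

Theorem corollary3p2 (A B : comNzRingType) (f : {rmorphism A -> B})
  (b : B -> Prop) (hb : is_ideal b) :
  regular_ideal (fun a : A => b (f a)) ->
  regular_ideal b ->
  (forall n : nat, (1 <= n <= 5)%N ->
     (Pcond n (amalg_ring f hb) <->
        [/\ Pcond n A, Pcond n B & forall y : B, b y])) /\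
  (locally_prufer (amalg_ring f hb) <->
     [/\ locally_prufer A, locally_prufer B & forall y : B, b y]).
Proof.
move=> regA regB; split; last first.
  apply: (@amalg_ringP locally_prufer) regA regB => [||R /locally_prufer_loc_orthogonal_sq0];
    [exact: locally_prufer_corner|exact: locally_prufer_glue|by right].
case=> [|[|[|[|[|[|n]]]]]] // _.
- apply: (@amalg_ringP (Pcond 1)) regA regB => [||R /semihereditary_orthogonal_dvd];
    [exact: semihereditary_corner|exact: semihereditary_glue|by left].
- apply: (@amalg_ringP (Pcond 2)) regA regB => [||R /wgldim_loc_orthogonal_sq0];
    [exact: wgldim_corner|exact: wgldim_glue|by right].
- apply: (@amalg_ringP (Pcond 3)) regA regB => [||R /arithmetical_loc_orthogonal_sq0];
    [exact: arithmetical_corner|exact: arithmetical_glue|by right].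
- apply: (@amalg_ringP (Pcond 4)) regA regB => [||R /gauss_orthogonal_dvd];
    [exact: gauss_corner|exact: gauss_glue|by left].
- apply: (@amalg_ringP (Pcond 5)) regA regB => [||R /prufer_orthogonal_dvd];
    [exact: prufer_corner|exact: prufer_glue|by left].
Qed.
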